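(* Let $\alpha=\alpha(s)$ be a unit speed semi-real spatial quaternionic curve in $\mathbb{R}^3_1$. Then: (i) $\alpha$ is a semi-real spatial quaternionic rectifying curve with a spacelike rectifying plane if and only if, up to parametrization, $\alpha(t)=y(t)\frac{a}{\cos t}$ with $a>0$, where $y(t)$ is a unit speed spatial spacelike quaternionic curve lying in the pseudosphere $S^2_1(1)$; (ii) $\alpha$ is a semi-real spatial spacelike (timelike) quaternionic rectifying curve with a timelike rectifying plane and a spacelike (timelike) position vector if and only if, up to parametrization, $\alpha(t)=y(t)\frac{a}{\sinh t}$ with $a>0$, where $y(t)$ is a unit speed spatial timelike (spacelike) quaternionic curve lying in the pseudosphere $S^2_1(1)$ (pseudohyperbolic space $H^2_0(1)$); (iii) $\alpha$ is a semi-real spatial spacelike (timelike) quaternionic rectifying curve with a timelike rectifying plane and a timelike (spacelike) position vector if and only if, up to parametrization, $\alpha(t)=y(t)\frac{a}{\cosh t}$ with $a>0$, where $y(t)$ is a unit speed spatial spacelike (timelike) quaternionic curve lying in the pseudohyperbolic space $H^2_0(1)$ (pseudosphere $S^2_1(1)$).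
   Context: $\mathbb{R}^3_1$ is the semi-Euclidean (Minkowski) 3-space, identified with the semi-real spatial quaternions $q=q_1\mathbf{e}_1+q_2\mathbf{e}_2+q_3\mathbf{e}_3$, with inner product $h(p,q)=p_1q_1+p_2q_2-p_3q_3$ and norm $N(q)=\sqrt{|h(q,q)|}$. A vector $v$ is spacelike if $h(v,v)>0$ (or $v=0$) and timelike if $h(v,v)<0$; a curve is spacelike/timelike if its tangent is. The pseudosphere is $S^2_1(1)=\{x\in\mathbb{R}^3_1: h(x,x)=1\}$ and the pseudohyperbolic space is $H^2_0(1)=\{x\in\mathbb{R}^3_1: h(x,x)=-1\}$. For a unit speed curve with non-null Frenet frame $\{\mathbf{t},\mathbf{n}_1,\mathbf{n}_2\}$ (tangent, principal normal, binormal), the rectifying plane is the plane spanned by $\mathbf{t}$ and $\mathbf{n}_2$, and $\alpha$ is a rectifying curve if $\alpha(s)=\lambda(s)\mathbf{t}(s)+\mu(s)\mathbf{n}_2(s)$ for some differentiable functions $\lambda,\mu$. *)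

From Stdlib Require Import Reals.
From Coquelicot Require Import Coquelicot.
Open Scope R_scope.

(** Semi-real spatial quaternions q = q1 e1 + q2 e2 + q3 e3, i.e. R^3_1. *)
Record V3 := mkV3 { c1 : R; c2 : R; c3 : R }.

Definition hm (p q : V3) : R := c1 p * c1 q + c2 p * c2 q - c3 p * c3 q.
Definition Nrm (q : V3) : R := sqrt (Rabs (hm q q)).

Definition vadd (p q : V3) : V3 := mkV3 (c1 p + c1 q) (c2 p + c2 q) (c3 p + c3 q).
(** product of a real (scalar) quaternion r with a spatial quaternion q *)
Definition vscal (r : R) (q : V3) : V3 := mkV3 (r * c1 q) (r * c2 q) (r * c3 q).

(** causal characters (the context counts 0 as spacelike) *)
Definition spacelike (v : V3) : Prop := hm v v > 0 \/ v = mkV3 0 0 0.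
Definition timelike (v : V3) : Prop := hm v v < 0.

Definition in_S21 (x : V3) : Prop := hm x x = 1.
Definition in_H20 (x : V3) : Prop := hm x x = -1.

Definition is_open_itv (I : R -> Prop) : Prop :=
  exists a b : Rbar, Rbar_lt a b /\ forall t, I t <-> (Rbar_lt a t /\ Rbar_lt t b).

Definition vD (f : R -> V3) (x : R) : V3 :=
  mkV3 (Derive (fun s => c1 (f s)) x) (Derive (fun s => c2 (f s)) x)
       (Derive (fun s => c3 (f s)) x).

Definition rsmooth (I : R -> Prop) (f : R -> R) : Prop :=
  forall t, I t -> forall n, ex_derive_n f n t.
Definition vsmooth (I : R -> Prop) (f : R -> V3) : Prop :=
  rsmooth I (fun s => c1 (f s)) /\ rsmooth I (fun s => c2 (f s)) /\
  rsmooth I (fun s => c3 (f s)).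

Definition unit_speed (I : R -> Prop) (f : R -> V3) : Prop :=
  forall s, I s -> Nrm (vD f s) = 1.

(** Non-null Frenet frame {t, n1, n2} of a unit speed curve alpha on I:
    t = alpha', t' non-null (so kappa = N(t') > 0), n1 = t'/kappa,
    n2 a smooth unit non-null vector field orthogonal to t and n1
    (determined up to sign; the rectifying plane span{t,n2} does not
    depend on that sign). *)
Definition frenet_frame (I : R -> Prop) (alpha T N1 N2 : R -> V3) : Prop :=
  vsmooth I N2 /\
  forall s, I s ->
    T s = vD alpha s /\
    hm (vD T s) (vD T s) <> 0 /\
    N1 s = vscal (/ Nrm (vD T s)) (vD T s) /\
    Rabs (hm (N2 s) (N2 s)) = 1 /\
    hm (N2 s) (T s) = 0 /\ hm (N2 s) (N1 s) = 0.

Definition has_nonnull_frenet_frame (I : R -> Prop) (alpha : R -> V3) : Prop :=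
  exists T N1 N2, frenet_frame I alpha T N1 N2.

Definition spacelike_plane (u v : V3) : Prop :=
  forall a b : R, (a <> 0 \/ b <> 0) ->
    hm (vadd (vscal a u) (vscal b v)) (vadd (vscal a u) (vscal b v)) > 0.
Definition timelike_plane (u v : V3) : Prop :=
  (forall a b : R, vadd (vscal a u) (vscal b v) = mkV3 0 0 0 -> a = 0 /\ b = 0) /\
  exists a b : R,
    hm (vadd (vscal a u) (vscal b v)) (vadd (vscal a u) (vscal b v)) < 0.

Definition rectifying_with (I : R -> Prop) (alpha : R -> V3)
    (P : V3 -> V3 -> Prop) : Prop :=
  exists (T N1 N2 : R -> V3) (lam mu : R -> R),
    frenet_frame I alpha T N1 N2 /\
    (forall s, I s ->
       ex_derive lam s /\ ex_derive mu s /\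
       alpha s = vadd (vscal (lam s) (T s)) (vscal (mu s) (N2 s))) /\
    (forall s, I s -> P (T s) (N2 s)).

Definition spacelike_curve (I : R -> Prop) (f : R -> V3) : Prop :=
  forall s, I s -> spacelike (vD f s).
Definition timelike_curve (I : R -> Prop) (f : R -> V3) : Prop :=
  forall s, I s -> timelike (vD f s).
Definition spacelike_position (I : R -> Prop) (f : R -> V3) : Prop :=
  forall s, I s -> spacelike (f s).
Definition timelike_position (I : R -> Prop) (f : R -> V3) : Prop :=
  forall s, I s -> timelike (f s).

Definition reparam (J I : R -> Prop) (phi : R -> R) : Prop :=
  rsmooth J phi /\
  (forall t, J t -> I (phi t) /\ Derive phi t <> 0) /\
  (forall s, I s -> exists t, J t /\ phi t = s) /\
  (forall t1 t2, J t1 -> J t2 -> phi t1 = phi t2 -> t1 = t2).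

Definition rep_form (I : R -> Prop) (alpha : R -> V3) (g : R -> R)
    (C : V3 -> Prop) (S : V3 -> Prop) : Prop :=
  exists (J : R -> Prop) (phi : R -> R) (y : R -> V3) (a : R),
    is_open_itv J /\ reparam J I phi /\ 0 < a /\
    vsmooth J y /\ unit_speed J y /\
    (forall t, J t -> C (vD y t) /\ S (y t) /\ g t <> 0 /\
                      alpha (phi t) = vscal (a / g t) (y t)).

(* A unit speed curve with a non-null Frenet frame is rectifying exactly when its
   position vector is orthogonal to the principal normal, i.e. [h(alpha, alpha'') = 0].
   Integrating twice, this says [h(alpha, t) = eT (s + c)] and
   [h(alpha, alpha) = eT (s + c)^2 + d] with [eT = h(t, t)] and [d = mu^2 h(n2, n2) <> 0],
   so the causal character of the rectifying plane fixes the sign of [d].  Putting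
   [s + c = +- a g'/g] with [a^2 = |d|] and [g = cos], [sinh] or [cosh] (according to the
   sign of [d] and to whether [(s + c)^2] exceeds [a^2]), the curve [y = (g / a) alpha]
   has unit speed and lies on [S^2_1] or [H^2_0].  Conversely, differentiating
   [alpha = (a / g) y] twice and using [g'' = +- g] gives back [h(alpha, alpha'') = 0]. *)

From Stdlib Require Import Reals Lra Lia Psatz Classical_Prop.
From Coquelicot Require Import Coquelicot.
Open Scope R_scope.

(** * Smoothness on open sets *)

Lemma open_locally_eq (U : R -> Prop) (f g : R -> R) x :
  open U -> U x -> (forall t, U t -> f t = g t) -> locally x (fun t => f t = g t).
Proof. intros HU Hx H. apply (filter_imp U); auto. Qed.

Fixpoint Cn (n : nat) (U : R -> Prop) (f : R -> R) : Prop :=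
  match n with
  | O => True
  | S m => (forall t, U t -> ex_derive f t) /\ Cn m U (Derive f)
  end.

Lemma Cn_ext n U f g : open U -> (forall t, U t -> f t = g t) -> Cn n U f -> Cn n U g.
Proof.
  revert f g; induction n as [|n IH]; intros f g HU Hfg Hf; simpl in *; auto.
  destruct Hf as [Hd Hn]. split.
  - intros t Ht. apply (ex_derive_ext_loc f); auto. apply (open_locally_eq U); auto.
  - apply (IH (Derive f)); auto. intros t Ht. apply Derive_ext_loc.
    apply (open_locally_eq U); auto.
Qed.

Lemma Cn_succ_weaken n U f : Cn (S n) U f -> Cn n U f.
Proof.
  revert f; induction n as [|n IH]; intros f Hf; simpl in *; auto.
  destruct Hf as [Hd [Hd' Hn]]. split; auto; apply IH; simpl; auto.
Qed.

Lemma Cn_subset n U V f : (forall t, V t -> U t) -> Cn n U f -> Cn n V f.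
Proof.
  revert f; induction n as [|n IH]; intros f HVU Hf; simpl in *; auto.
  destruct Hf as [Hd Hn]; split; auto.
Qed.

Lemma Cn_const n U c : open U -> Cn n U (fun _ => c).
Proof.
  revert c; induction n as [|n IH]; intros c HU; simpl; auto. split.
  - intros; apply ex_derive_const.
  - apply (Cn_ext n U (fun _ => 0)); auto. intros; now rewrite Derive_const.
Qed.

Lemma Cn_plus n U f g : open U -> Cn n U f -> Cn n U g -> Cn n U (fun x => f x + g x).
Proof.
  revert f g; induction n as [|n IH]; intros f g HU Hf Hg; simpl in *; auto.
  destruct Hf as [Hf1 Hf2]; destruct Hg as [Hg1 Hg2]. split.
  - intros t Ht. apply (ex_derive_plus f g); auto.
  - apply (Cn_ext n U (fun x => Derive f x + Derive g x)); auto.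
    intros t Ht. rewrite Derive_plus; auto.
Qed.

Lemma Cn_mult n U f g : open U -> Cn n U f -> Cn n U g -> Cn n U (fun x => f x * g x).
Proof.
  revert f g; induction n as [|n IH]; intros f g HU Hf Hg; simpl; auto.
  pose proof (Cn_succ_weaken n U f Hf) as Hf'. pose proof (Cn_succ_weaken n U g Hg) as Hg'.
  destruct Hf as [Hf1 Hf2]; destruct Hg as [Hg1 Hg2]. split.
  - intros t Ht. apply ex_derive_mult; auto.
  - apply (Cn_ext n U (fun x => Derive f x * g x + f x * Derive g x)); auto.
    + intros t Ht. rewrite Derive_mult; auto.
    + apply Cn_plus; auto.
Qed.

Lemma Cn_opp n U f : open U -> Cn n U f -> Cn n U (fun x => - f x).
Proof.
  intros HU Hf. apply (Cn_ext n U (fun x => -1 * f x)); auto.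
  - intros; ring.
  - apply Cn_mult; auto using Cn_const.
Qed.

Lemma Cn_inv n U g : open U -> (forall t, U t -> g t <> 0) -> Cn n U g -> Cn n U (fun x => / g x).
Proof.
  revert g; induction n as [|n IH]; intros g HU Hnz Hg; simpl; auto.
  pose proof (Cn_succ_weaken n U g Hg) as Hg'.
  destruct Hg as [Hg1 Hg2]. split.
  - intros t Ht. apply ex_derive_inv; auto.
  - apply (Cn_ext n U (fun x => (- Derive g x) * ((/ g x) * (/ g x)))); auto.
    + intros t Ht. rewrite Derive_inv; auto. field; auto.
    + apply Cn_mult; auto. apply Cn_opp; auto. apply Cn_mult; auto.
Qed.

Lemma Cn_minus n U f g : open U -> Cn n U f -> Cn n U g -> Cn n U (fun x => f x - g x).
Proof. intros. apply Cn_plus, Cn_opp; auto. Qed.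

Lemma Cn_div n U f g : open U -> (forall t, U t -> g t <> 0) -> Cn n U f -> Cn n U g ->
  Cn n U (fun x => f x / g x).
Proof. intros. apply (Cn_mult n U f (fun x => / g x)), Cn_inv; auto. Qed.

Lemma Cn_comp n U V f p : open U -> open V -> (forall t, U t -> V (p t)) ->
  Cn n V f -> Cn n U p -> Cn n U (fun x => f (p x)).
Proof.
  revert f p; induction n as [|n IH]; intros f p HU HV HUV Hf Hp; simpl; auto.
  pose proof (Cn_succ_weaken n U p Hp) as Hp'.
  pose proof (Cn_succ_weaken n V f Hf) as Hf'.
  destruct Hf as [Hf1 Hf2]; destruct Hp as [Hp1 Hp2]. split.
  - intros t Ht. apply ex_derive_comp; auto.
  - apply (Cn_ext n U (fun x => Derive f (p x) * Derive p x)); auto.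
    + intros t Ht. rewrite (Derive_comp f p t); auto. ring.
    + apply Cn_mult; auto.
Qed.

Lemma Derive_n_Derive f j x : Derive_n (Derive f) j x = Derive_n f (S j) x.
Proof.
  revert x; induction j as [|j IH]; intros x; simpl; auto.
  apply Derive_ext. intros; apply IH.
Qed.

Lemma rsmooth_Cn U f : open U -> rsmooth U f -> forall n, Cn n U f.
Proof.
  intros HU Hs n. revert f Hs; induction n as [|n IH]; intros f Hs; simpl; auto. split.
  - intros t Ht. exact (Hs t Ht 1%nat).
  - apply IH. intros t Ht [|k]; simpl; auto.
    apply (ex_derive_ext (Derive_n f (S k))).
    + intros; symmetry; apply Derive_n_Derive.
    + exact (Hs t Ht (S (S k))).
Qed.

Lemma Cn_ex_derive_n n U f t : Cn n U f -> U t ->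
  forall k, (k < n)%nat -> ex_derive (Derive_n f k) t.
Proof.
  revert f; induction n as [|n IH]; intros f Hf Ht k Hk; [lia|].
  destruct Hf as [Hf1 Hf2]. destruct k as [|k]; [apply Hf1; auto|].
  apply (ex_derive_ext (Derive_n (Derive f) k)).
  - intros; apply Derive_n_Derive.
  - apply IH; auto. lia.
Qed.

Lemma Cn_rsmooth U f : (forall n, Cn n U f) -> rsmooth U f.
Proof.
  intros H t Ht [|k]; simpl; auto.
  apply (Cn_ex_derive_n (S (S k)) U); auto.
Qed.

Definition convex (U : R -> Prop) := forall x y z, U x -> U z -> x <= y <= z -> U y.
Definition has_no_max (U : R -> Prop) := forall t, U t -> exists u, t < u /\ U u.
Definition has_no_min (U : R -> Prop) := forall t, U t -> exists u, u < t /\ U u.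

Lemma open_itv_convex U : is_open_itv U -> convex U.
Proof.
  intros [a [b [_ HU]]] x y z Hx Hz Hy. apply HU in Hx; apply HU in Hz. apply HU.
  destruct Hx, Hz; split; [destruct a | destruct b]; simpl in *; auto; lra.
Qed.

Lemma open_itv_has_no_max U : is_open_itv U -> has_no_max U.
Proof.
  intros [a [b [_ HU]]] t Ht. apply HU in Ht. destruct Ht as [H1 H2].
  destruct b as [b| |]; simpl in H2; [exists ((t + b) / 2) | exists (t + 1) | contradiction];
  split; try lra; apply HU; split; (destruct a; simpl in *; auto; lra).
Qed.

Lemma open_itv_has_no_min U : is_open_itv U -> has_no_min U.
Proof.
  intros [a [b [_ HU]]] t Ht. apply HU in Ht. destruct Ht as [H1 H2].
  destruct a as [a| |]; simpl in H1; [exists ((t + a) / 2) | contradiction | exists (t - 1)];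
  split; try lra; apply HU; split; (destruct b; simpl in *; auto; lra).
Qed.

Lemma open_itv_nonempty U : is_open_itv U -> exists s, U s.
Proof.
  intros [lo [hi [Hlh He]]].
  destruct lo as [lo| |], hi as [hi| |]; simpl in Hlh; try contradiction;
  [exists ((lo + hi) / 2) | exists (lo + 1) | exists (hi - 1) | exists 0];
  apply He; simpl; auto; lra.
Qed.

Lemma open_itv_open U : is_open_itv U -> open U.
Proof.
  intros HU x Hx.
  destruct (open_itv_has_no_max U HU x Hx) as [u [Hu1 Hu2]].
  destruct (open_itv_has_no_min U HU x Hx) as [v [Hv1 Hv2]].
  assert (He : 0 < Rmin (u - x) (x - v)) by (apply Rmin_pos; lra).
  exists (mkposreal _ He). intros y Hy. change (Rabs (y - x) < Rmin (u - x) (x - v)) in Hy.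
  pose proof (Rmin_l (u - x) (x - v)). pose proof (Rmin_r (u - x) (x - v)).
  apply Rabs_def2 in Hy. apply (open_itv_convex U HU v y u); auto; lra.
Qed.

(* The endpoints are the infimum and supremum of U. *)
Lemma open_itv_intro U :
  (exists t, U t) -> convex U -> has_no_max U -> has_no_min U -> is_open_itv U.
Proof.
  intros [t0 Ht0] Hc Hu Hd.
  exists (Glb_Rbar U), (Lub_Rbar U).
  destruct (Lub_Rbar_correct U) as [Hub Hlub].
  destruct (Glb_Rbar_correct U) as [Hlb Hglb].
  assert (K1 : forall t, U t -> Rbar_lt t (Lub_Rbar U)).
  { intros t Ht. destruct (Hu t Ht) as [u [Hu1 Hu2]].
    apply Rbar_lt_le_trans with (y := Finite u); [simpl; auto | apply Hub; auto]. }
  assert (K2 : forall t, U t -> Rbar_lt (Glb_Rbar U) t).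
  { intros t Ht. destruct (Hd t Ht) as [u [Hu1 Hu2]].
    apply Rbar_le_lt_trans with (y := Finite u); [apply Hlb; auto | simpl; auto]. }
  split; [apply Rbar_lt_trans with (y := Finite t0); auto|].
  intros t; split; [auto|]. intros [H1 H2].
  assert (E1 : exists z, U z /\ t < z).
  { apply NNPP. intros Hn.
    assert (Hub' : is_ub_Rbar U t).
    { intros z Hz. simpl. apply Rnot_lt_le. intros Hl. apply Hn. eauto. }
    apply Hlub in Hub'. apply (Rbar_lt_not_le _ _ H2). auto. }
  assert (E2 : exists z, U z /\ z < t).
  { apply NNPP. intros Hn.
    assert (Hlb' : is_lb_Rbar U t).
    { intros z Hz. simpl. apply Rnot_lt_le. intros Hl. apply Hn. eauto. }
    apply Hglb in Hlb'. apply (Rbar_lt_not_le _ _ H1). auto. }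
  destruct E1 as [z [Hz1 Hz2]]; destruct E2 as [w [Hw1 Hw2]].
  apply (Hc w t z); auto; lra.
Qed.

Lemma open_itv_full : is_open_itv (fun _ : R => True).
Proof. exists m_infty, p_infty. split; simpl; tauto. Qed.

Lemma open_itv_pos : is_open_itv (fun t : R => 0 < t).
Proof. exists (Finite 0), p_infty. split; simpl; tauto. Qed.

Lemma open_itv_half_pi : is_open_itv (fun t : R => - (PI / 2) < t < PI / 2).
Proof.
  exists (Finite (- (PI / 2))), (Finite (PI / 2)). split; [simpl; pose proof PI_RGT_0; lra|].
  intros; simpl; tauto.
Qed.

Lemma derive_zero_const_on_itv I (f : R -> R) x z : convex I ->
  (forall t, I t -> is_derive f t 0) -> I x -> I z -> f x = f z.
Proof.
  intros Hc Hd Hx Hz. destruct (Rtotal_order x z) as [H|[H|H]].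
  - apply (@eq_is_derive R_NormedModule f x z); auto. intros t Ht. apply Hd, (Hc x t z); auto.
  - subst; auto.
  - symmetry. apply (@eq_is_derive R_NormedModule f z x); auto.
    intros t Ht. apply Hd, (Hc z t x); auto.
Qed.

Lemma is_derive_rewrite (f : R -> R) (x l l' : R) : is_derive f x l -> l = l' -> is_derive f x l'.
Proof. now intros H <-. Qed.

Lemma is_derive_Rconst (c x : R) : is_derive (fun _ => c) x 0.
Proof. apply (@is_derive_const R_AbsRing R_NormedModule). Qed.

Lemma is_derive_Rid (x : R) : is_derive (fun t => t) x 1.
Proof. apply (@is_derive_id R_AbsRing). Qed.

Lemma is_derive_shift (c x : R) : is_derive (fun t => t + c) x 1.
Proof.
  apply (is_derive_rewrite _ _ (1 + 0)); [|ring].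
  apply (@is_derive_plus R_AbsRing R_NormedModule); [apply is_derive_Rid | apply is_derive_Rconst].
Qed.

Lemma is_derive_Rplus (f g : R -> R) x df dg : is_derive f x df -> is_derive g x dg ->
  is_derive (fun t => f t + g t) x (df + dg).
Proof. apply (@is_derive_plus R_AbsRing R_NormedModule). Qed.

Lemma is_derive_Rminus (f g : R -> R) x df dg : is_derive f x df -> is_derive g x dg ->
  is_derive (fun t => f t - g t) x (df - dg).
Proof. apply (@is_derive_minus R_AbsRing R_NormedModule). Qed.

Lemma is_derive_Rcomp (f g : R -> R) x df dg : is_derive f (g x) df -> is_derive g x dg ->
  is_derive (fun t => f (g t)) x (df * dg).
Proof.
  intros Hf Hg. apply (is_derive_rewrite _ _ (dg * df)); [|apply Rmult_comm].
  apply (@is_derive_comp R_AbsRing R_NormedModule f g); auto.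
Qed.

Lemma is_derive_unique_on U (f g : R -> R) s l l' : open U -> U s ->
  (forall t, U t -> f t = g t) -> is_derive f s l -> is_derive g s l' -> l = l'.
Proof.
  intros HU Hs He Hf Hg. apply (is_derive_ext_loc f g) in Hf.
  - rewrite <- (is_derive_unique _ _ _ Hf). apply is_derive_unique; auto.
  - apply (open_locally_eq U); auto.
Qed.

Lemma is_derive_sign_0 U (f : R -> R) s df : open U -> U s ->
  (forall t, U t -> f t ^ 2 = 1) -> is_derive f s df -> df = 0.
Proof.
  intros HU Hs Hc Hd.
  assert (E : df * f s + f s * df = 0).
  { apply (is_derive_unique_on U (fun t => f t * f t) (fun _ => 1) s); auto.
    - intros t Ht. rewrite <- (Hc t Ht). ring.
    - apply Derive.is_derive_mult; auto.
    - apply is_derive_Rconst. }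
  pose proof (Hc s Hs). nra.
Qed.

Lemma is_derive_sinh x : is_derive sinh x (cosh x).
Proof. apply is_derive_Reals, derivable_pt_lim_sinh. Qed.

Lemma is_derive_cosh x : is_derive cosh x (sinh x).
Proof. apply is_derive_Reals, derivable_pt_lim_cosh. Qed.

Lemma is_derive_opp_sin x : is_derive (fun x => - sin x) x (- cos x).
Proof. apply (is_derive_opp sin), is_derive_sin. Qed.

Lemma Cn_sin_cos n U : open U -> Cn n U sin /\ Cn n U cos.
Proof.
  intros HU; induction n as [|n [IH1 IH2]]; simpl; auto. split; split.
  - intros t _; eexists; apply is_derive_sin.
  - apply (Cn_ext n U cos); auto. intros; symmetry; apply is_derive_unique, is_derive_sin.
  - intros t _; eexists; apply is_derive_cos.
  - apply (Cn_ext n U (fun x => - sin x)); auto.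
    + intros; symmetry; apply is_derive_unique, is_derive_cos.
    + apply Cn_opp; auto.
Qed.

Lemma Cn_sinh_cosh n U : open U -> Cn n U sinh /\ Cn n U cosh.
Proof.
  intros HU; induction n as [|n [IH1 IH2]]; simpl; auto. split; split.
  - intros t _; eexists; apply is_derive_sinh.
  - apply (Cn_ext n U cosh); auto. intros; symmetry; apply is_derive_unique, is_derive_sinh.
  - intros t _; eexists; apply is_derive_cosh.
  - apply (Cn_ext n U sinh); auto. intros; symmetry; apply is_derive_unique, is_derive_cosh.
Qed.

Lemma open_full : open (fun _ : R => True).
Proof. intros x _; exists (mkposreal 1 Rlt_0_1); auto. Qed.

Lemma sin_cos_sq x : sin x ^ 2 + cos x ^ 2 = 1.
Proof. rewrite <- !Rsqr_pow2. apply sin2_cos2. Qed.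

Lemma cosh_sinh_sq x : cosh x ^ 2 - sinh x ^ 2 = 1.
Proof. unfold cosh, sinh. rewrite exp_Ropp. pose proof (exp_pos x). field. lra. Qed.

Lemma cosh_pos x : 0 < cosh x.
Proof. unfold cosh. pose proof (exp_pos x); pose proof (exp_pos (- x)). lra. Qed.

Lemma sinh_pos x : 0 < x -> 0 < sinh x.
Proof. intros H. rewrite <- sinh_0. apply sinh_lt; auto. Qed.

Definition artanh (x : R) := ln ((1 + x) / (1 - x)) / 2.
Definition arcoth (x : R) := ln ((x + 1) / (x - 1)) / 2.

Lemma tanh_exp t : sinh t / cosh t = (exp (2 * t) - 1) / (exp (2 * t) + 1).
Proof.
  unfold sinh, cosh. rewrite exp_Ropp. replace (2 * t) with (t + t) by ring.
  rewrite exp_plus. pose proof (exp_pos t). field. nra.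
Qed.

Lemma coth_exp t : 0 < t -> cosh t / sinh t = (exp (2 * t) + 1) / (exp (2 * t) - 1).
Proof.
  intros Ht. assert (He : 1 < exp t) by (rewrite <- exp_0; apply exp_increasing; auto).
  unfold sinh, cosh. rewrite exp_Ropp. replace (2 * t) with (t + t) by ring.
  rewrite exp_plus. field. split; nra.
Qed.

Lemma tanh_artanh x : -1 < x < 1 -> sinh (artanh x) / cosh (artanh x) = x.
Proof.
  intros Hx. rewrite tanh_exp. unfold artanh.
  replace (2 * (ln ((1 + x) / (1 - x)) / 2)) with (ln ((1 + x) / (1 - x))) by field.
  rewrite exp_ln; [field; lra|]. apply Rdiv_lt_0_compat; lra.
Qed.

Lemma coth_arcoth x : 1 < x -> 0 < arcoth x /\ cosh (arcoth x) / sinh (arcoth x) = x.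
Proof.
  intros Hx. assert (Hq : 1 < (x + 1) / (x - 1)).
  { apply (Rmult_lt_reg_r (x - 1)); [lra|]. field_simplify; lra. }
  assert (Hp : 0 < arcoth x).
  { unfold arcoth. pose proof (ln_increasing 1 _ Rlt_0_1 Hq) as Hl. rewrite ln_1 in Hl. lra. }
  split; auto. rewrite coth_exp; auto. unfold arcoth.
  replace (2 * (ln ((x + 1) / (x - 1)) / 2)) with (ln ((x + 1) / (x - 1))) by field.
  rewrite exp_ln by lra. field. split; lra.
Qed.

Lemma sq_pos x : x <> 0 -> 0 < x ^ 2.
Proof. intros H. destruct (Rtotal_order x 0) as [H1|[H1|H1]]; [nra|contradiction|nra]. Qed.

Lemma sq_eq0 x : x ^ 2 = 0 -> x = 0.
Proof. intros H. nra. Qed.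

Lemma sign_cases x : x ^ 2 = 1 -> x = 1 \/ x = -1.
Proof.
  intros H. assert ((x - 1) * (x + 1) = 0) by (simpl in H; nra).
  apply Rmult_integral in H0. destruct H0; [left|right]; lra.
Qed.

Lemma sign_neq0 x : x ^ 2 = 1 -> x <> 0.
Proof. intros H ->. simpl in H. lra. Qed.

Lemma sign_inv x : x ^ 2 = 1 -> / x = x.
Proof. intros H. destruct (sign_cases x H) as [-> | ->]; field. Qed.

Lemma sign_eq_of_mul (n k m c : R) : n ^ 2 = 1 -> k ^ 2 = 1 -> 0 <= m -> 0 < c ->
  m * n = c * k -> n = k.
Proof.
  intros Hn Hk Hm Hc E.
  destruct (sign_cases n Hn) as [-> | ->]; destruct (sign_cases k Hk) as [-> | ->]; lra.
Qed.

Definition V0 := mkV3 0 0 0.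

Lemma V3_eq (p q : V3) : c1 p = c1 q -> c2 p = c2 q -> c3 p = c3 q -> p = q.
Proof. destruct p, q; simpl; intros; subst; auto. Qed.

Lemma hm_sym p q : hm p q = hm q p.
Proof. unfold hm; ring. Qed.

Lemma hm_addl p q u : hm (vadd p q) u = hm p u + hm q u.
Proof. unfold hm; simpl; ring. Qed.

Lemma hm_addr p q u : hm u (vadd p q) = hm u p + hm u q.
Proof. unfold hm; simpl; ring. Qed.

Lemma hm_scall k p u : hm (vscal k p) u = k * hm p u.
Proof. unfold hm; simpl; ring. Qed.

Lemma hm_scalr k p u : hm u (vscal k p) = k * hm u p.
Proof. unfold hm; simpl; ring. Qed.

Lemma hm_0l u : hm V0 u = 0.
Proof. unfold hm; simpl; ring. Qed.

Lemma hm_lin_comb a b u v : hm (vadd (vscal a u) (vscal b v)) (vadd (vscal a u) (vscal b v)) =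
  a ^ 2 * hm u u + 2 * a * b * hm u v + b ^ 2 * hm v v.
Proof. unfold hm; simpl; ring. Qed.

Lemma Nrm_eq_1 v : Nrm v = 1 <-> hm v v ^ 2 = 1.
Proof.
  unfold Nrm. rewrite <- (pow2_abs (hm v v)). split; intros H.
  - rewrite <- (sqrt_sqrt (Rabs (hm v v))) by apply Rabs_pos. rewrite H. ring.
  - assert (Rabs (hm v v) = 1) by (pose proof (Rabs_pos (hm v v)); nra).
    rewrite H0. apply sqrt_1.
Qed.

Definition is_vderive (u : R -> V3) (s : R) (w : V3) : Prop :=
  is_derive (fun s => c1 (u s)) s (c1 w) /\ is_derive (fun s => c2 (u s)) s (c2 w) /\
  is_derive (fun s => c3 (u s)) s (c3 w).

Lemma is_vderive_vD u s w : is_vderive u s w -> vD u s = w.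
Proof.
  intros [H1 [H2 H3]]. unfold vD. apply V3_eq; simpl; apply is_derive_unique; auto.
Qed.

Lemma is_vderive_unique u s w w' : is_vderive u s w -> is_vderive u s w' -> w = w'.
Proof. intros H H'. now rewrite <- (is_vderive_vD _ _ _ H), <- (is_vderive_vD _ _ _ H'). Qed.

Lemma vsmooth_is_vderive U u s : vsmooth U u -> U s -> is_vderive u s (vD u s).
Proof.
  intros [H1 [H2 H3]] Hs. split; [|split]; simpl; apply Derive_correct.
  - exact (H1 s Hs 1%nat).
  - exact (H2 s Hs 1%nat).
  - exact (H3 s Hs 1%nat).
Qed.

Lemma vsmooth_is_vderive2 U u s : vsmooth U u -> U s -> is_vderive (vD u) s (vD (vD u) s).
Proof.
  intros [H1 [H2 H3]] Hs. split; [|split]; simpl; apply Derive_correct.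
  - exact (H1 s Hs 2%nat).
  - exact (H2 s Hs 2%nat).
  - exact (H3 s Hs 2%nat).
Qed.

Lemma is_derive_hm u v s u' v' : is_vderive u s u' -> is_vderive v s v' ->
  is_derive (fun t => hm (u t) (v t)) s (hm u' (v s) + hm (u s) v').
Proof.
  intros [U1 [U2 U3]] [V1 [V2 V3]]. unfold hm.
  eapply is_derive_rewrite.
  - apply is_derive_Rminus; [apply is_derive_Rplus|].
    + apply (Derive.is_derive_mult _ _ _ _ _ U1 V1).
    + apply (Derive.is_derive_mult _ _ _ _ _ U2 V2).
    + apply (Derive.is_derive_mult _ _ _ _ _ U3 V3).
  - ring.
Qed.

Lemma is_vderive_scal (r : R -> R) u s r' u' : is_derive r s r' -> is_vderive u s u' ->
  is_vderive (fun t => vscal (r t) (u t)) s (vadd (vscal r' (u s)) (vscal (r s) u')).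
Proof.
  intros Hr [U1 [U2 U3]]. split; [|split]; apply Derive.is_derive_mult; auto.
Qed.

Lemma is_vderive_comp u p t w dp : is_vderive u (p t) w -> is_derive p t dp ->
  is_vderive (fun t => u (p t)) t (vscal dp w).
Proof.
  intros [U1 [U2 U3]] Hp. split; [|split]; simpl; eapply is_derive_rewrite.
  - apply (is_derive_Rcomp (fun s => c1 (u s))); eauto.
  - ring.
  - apply (is_derive_Rcomp (fun s => c2 (u s))); eauto.
  - ring.
  - apply (is_derive_Rcomp (fun s => c3 (u s))); eauto.
  - ring.
Qed.

Lemma is_vderive_ext U u v s w : open U -> U s -> (forall t, U t -> u t = v t) ->
  is_vderive u s w -> is_vderive v s w.
Proof.
  intros HU Hs He [U1 [U2 U3]].
  split; [|split]; (eapply is_derive_ext_loc; [|eassumption]);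
    apply (open_locally_eq U); auto; intros; rewrite He; auto.
Qed.

Lemma unit_speed_T_T' I alpha s : open I -> vsmooth I alpha -> unit_speed I alpha -> I s ->
  hm (vD alpha s) (vD (vD alpha) s) = 0.
Proof.
  intros HI Hsm Hu Hs.
  pose proof (vsmooth_is_vderive2 I alpha s Hsm Hs) as H2.
  assert (K : hm (vD (vD alpha) s) (vD alpha s) + hm (vD alpha s) (vD (vD alpha) s) = 0).
  { apply (is_derive_sign_0 I (fun t => hm (vD alpha t) (vD alpha t)) s); auto.
    - intros t Ht. apply Nrm_eq_1, Hu; auto.
    - apply is_derive_hm; auto. }
  rewrite hm_sym in K. lra.
Qed.

(** * Lorentzian linear algebra *)

(* The Gram determinant of a non-null orthogonal triple is [- D ^ 2], [D] its
   determinant, so such a triple is a basis. *)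
Lemma hm_ortho_basis_zero (w u1 u2 u3 : V3) :
  hm u1 u2 = 0 -> hm u1 u3 = 0 -> hm u2 u3 = 0 ->
  hm u1 u1 <> 0 -> hm u2 u2 <> 0 -> hm u3 u3 <> 0 ->
  hm w u1 = 0 -> hm w u2 = 0 -> hm w u3 = 0 -> w = V0.
Proof.
  destruct w as [w1 w2 w3], u1 as [a1 a2 a3], u2 as [b1 b2 b3], u3 as [d1 d2 d3].
  unfold hm; simpl. intros H12 H13 H23 N1 N2 N3 W1 W2 W3.
  set (D := a1 * (b2 * d3 - b3 * d2) - a2 * (b1 * d3 - b3 * d1) + a3 * (b1 * d2 - b2 * d1)).
  assert (HD : - D ^ 2 =
    (a1*a1+a2*a2-a3*a3) * (b1*b1+b2*b2-b3*b3) * (d1*d1+d2*d2-d3*d3)).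
  { assert (G : - D ^ 2 =
      (a1*a1+a2*a2-a3*a3) * ((b1*b1+b2*b2-b3*b3) * (d1*d1+d2*d2-d3*d3) - (b1*d1+b2*d2-b3*d3)^2)
      - (a1*b1+a2*b2-a3*b3) * ((a1*b1+a2*b2-a3*b3) * (d1*d1+d2*d2-d3*d3)
                               - (b1*d1+b2*d2-b3*d3)*(a1*d1+a2*d2-a3*d3))
      + (a1*d1+a2*d2-a3*d3) * ((a1*b1+a2*b2-a3*b3) * (b1*d1+b2*d2-b3*d3)
                               - (b1*b1+b2*b2-b3*b3)*(a1*d1+a2*d2-a3*d3))).
    { unfold D. ring. }
    rewrite G, H12, H13, H23. ring. }
  assert (HDn : D <> 0).
  { intros HD0. rewrite HD0 in HD.
    assert (HZ : (a1*a1+a2*a2-a3*a3) * (b1*b1+b2*b2-b3*b3) * (d1*d1+d2*d2-d3*d3) = 0)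
      by (rewrite <- HD; ring).
    repeat apply Rmult_integral in HZ as [HZ|HZ]; contradiction. }
  assert (E1 : D * w1 = (b2*d3-b3*d2) * (w1*a1+w2*a2-w3*a3) + (d2*a3-d3*a2) * (w1*b1+w2*b2-w3*b3)
                       + (a2*b3-a3*b2) * (w1*d1+w2*d2-w3*d3)) by (unfold D; ring).
  assert (E2 : D * w2 = (b3*d1-b1*d3) * (w1*a1+w2*a2-w3*a3) + (d3*a1-d1*a3) * (w1*b1+w2*b2-w3*b3)
                       + (a3*b1-a1*b3) * (w1*d1+w2*d2-w3*d3)) by (unfold D; ring).
  assert (E3 : D * w3 = - ((b1*d2-b2*d1) * (w1*a1+w2*a2-w3*a3) + (d1*a2-d2*a1) * (w1*b1+w2*b2-w3*b3)
                       + (a1*b2-a2*b1) * (w1*d1+w2*d2-w3*d3))) by (unfold D; ring).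
  rewrite W1, W2, W3 in *.
  unfold V0; f_equal; apply (Rmult_eq_reg_l D); auto; [rewrite E1 | rewrite E2 | rewrite E3]; ring.
Qed.

Lemma hm_ortho_expansion (v u1 u2 u3 : V3) :
  hm u1 u2 = 0 -> hm u1 u3 = 0 -> hm u2 u3 = 0 ->
  hm u1 u1 <> 0 -> hm u2 u2 <> 0 -> hm u3 u3 <> 0 ->
  v = vadd (vadd (vscal (hm v u1 / hm u1 u1) u1) (vscal (hm v u2 / hm u2 u2) u2))
           (vscal (hm v u3 / hm u3 u3) u3).
Proof.
  intros H12 H13 H23 N1 N2 N3.
  set (w := vadd (vadd (vscal (hm v u1 / hm u1 u1) u1) (vscal (hm v u2 / hm u2 u2) u2))
           (vscal (hm v u3 / hm u3 u3) u3)).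
  set (z := vadd v (vscal (-1) w)).
  assert (Hz : z = V0).
  { apply (hm_ortho_basis_zero z u1 u2 u3); auto.
    all: unfold z, w; rewrite !hm_addl, !hm_scall, !hm_addl, !hm_scall.
    all: rewrite ?(hm_sym u2 u1), ?(hm_sym u3 u1), ?(hm_sym u3 u2), ?H12, ?H13, ?H23.
    all: field; auto. }
  unfold z, V0 in Hz. injection Hz as E1 E2 E3. apply V3_eq; simpl in *; lra.
Qed.

Lemma hm_ortho_norm (v u1 u2 u3 : V3) :
  hm u1 u2 = 0 -> hm u1 u3 = 0 -> hm u2 u3 = 0 ->
  hm u1 u1 <> 0 -> hm u2 u2 <> 0 -> hm u3 u3 <> 0 -> hm v u2 = 0 ->
  hm v v = hm v u1 ^ 2 / hm u1 u1 + hm v u3 ^ 2 / hm u3 u3.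
Proof.
  intros H12 H13 H23 N1 N2 N3 Hv.
  rewrite (hm_ortho_expansion v u1 u2 u3) at 1 by auto.
  rewrite !hm_addl, !hm_scall, (hm_sym u1 v), (hm_sym u2 v), (hm_sym u3 v), Hv. field; auto.
Qed.

(* Cauchy-Schwarz on the first two coordinates. *)
Lemma timelike_not_ortho (u v : V3) : hm u u < 0 -> hm v v < 0 -> hm u v <> 0.
Proof.
  destruct u as [u1 u2 u3], v as [v1 v2 v3]; unfold hm; simpl. intros Hu Hv Huv.
  assert (K : (u1*v1+u2*v2)^2 <= (u1*u1+u2*u2)*(v1*v1+v2*v2)).
  { assert (0 <= (u1*v2-u2*v1)^2) by apply pow2_ge_0. nra. }
  assert (u1*v1+u2*v2 = u3*v3) by lra.
  assert ((u1*u1+u2*u2)*(v1*v1+v2*v2) < (u3*u3)*(v3*v3)).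
  { apply Rle_lt_trans with ((u3*u3)*(v1*v1+v2*v2)).
    - apply Rmult_le_compat_r; nra.
    - apply Rmult_lt_compat_l; nra. }
  rewrite H in K. nra.
Qed.

Lemma spacelike_plane_intro u v : hm u u = 1 -> hm v v = 1 -> hm u v = 0 -> spacelike_plane u v.
Proof.
  intros H1 H2 H3 a b Hab. rewrite hm_lin_comb, H1, H2, H3.
  pose proof (pow2_ge_0 a). pose proof (pow2_ge_0 b).
  destruct Hab as [Ha|Hb]; [apply sq_pos in Ha | apply sq_pos in Hb]; lra.
Qed.

Lemma timelike_plane_intro u v : hm u u ^ 2 = 1 -> hm v v = - hm u u -> hm u v = 0 ->
  timelike_plane u v.
Proof.
  intros Hu Hv H0. pose proof (sign_neq0 _ Hu) as Hnz. split.
  - intros a b Z.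
    assert (K1 : hm (vadd (vscal a u) (vscal b v)) u = 0) by (rewrite Z; apply hm_0l).
    assert (K2 : hm (vadd (vscal a u) (vscal b v)) v = 0) by (rewrite Z; apply hm_0l).
    rewrite hm_addl, !hm_scall, (hm_sym v u), H0 in K1.
    rewrite hm_addl, !hm_scall, H0, Hv in K2.
    split; [apply (Rmult_eq_reg_r (hm u u)) | apply (Rmult_eq_reg_r (- hm u u))]; auto; lra.
  - destruct (sign_cases _ Hu) as [E|E]; [exists 0, 1 | exists 1, 0];
      rewrite hm_lin_comb, Hv, E; lra.
Qed.

Lemma timelike_plane_ortho u v : timelike_plane u v -> hm u v = 0 ->
  hm u u ^ 2 = 1 -> hm v v ^ 2 = 1 -> hm v v = - hm u u.
Proof.
  intros [_ [a [b Hab]]] H0 Hu Hv. rewrite hm_lin_comb, H0 in Hab.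
  pose proof (pow2_ge_0 a). pose proof (pow2_ge_0 b).
  destruct (sign_cases _ Hu) as [Eu|Eu]; destruct (sign_cases _ Hv) as [Ev|Ev];
    rewrite ?Eu, ?Ev in *; try lra.
  exfalso. apply (timelike_not_ortho u v); lra.
Qed.

Lemma spacelike_unit v : spacelike v -> hm v v ^ 2 = 1 -> hm v v = 1.
Proof.
  intros [H|H] H2; [destruct (sign_cases _ H2); lra|].
  subst v. unfold hm in H2; simpl in H2. lra.
Qed.

Lemma timelike_unit v : timelike v -> hm v v ^ 2 = 1 -> hm v v = -1.
Proof. intros H H2. unfold timelike in H. destruct (sign_cases _ H2); lra. Qed.

(** * The Frenet frame and the rectifying condition *)

Section Frenet.
Variables (I : R -> Prop) (alpha T N1 N2 : R -> V3).
Hypotheses (HI : open I) (Hsm : vsmooth I alpha) (Hu : unit_speed I alpha)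
  (HF : frenet_frame I alpha T N1 N2).

Lemma frenet_T s : I s -> T s = vD alpha s.
Proof. intros Hs. destruct HF as [_ H]. apply H; auto. Qed.

Lemma frenet_T' s : I s -> vD T s = vD (vD alpha) s.
Proof.
  intros Hs. apply is_vderive_vD, (is_vderive_ext I (vD alpha)); auto.
  - intros; symmetry; apply frenet_T; auto.
  - apply vsmooth_is_vderive2 with I; auto.
Qed.

Lemma frenet_acc_nonnull s : I s -> hm (vD (vD alpha) s) (vD (vD alpha) s) <> 0.
Proof. intros Hs. rewrite <- frenet_T'; auto. destruct HF as [_ H]. apply H; auto. Qed.

Lemma frenet_N1_acc s : I s -> exists k, k <> 0 /\ N1 s = vscal k (vD (vD alpha) s).
Proof.
  intros Hs. destruct HF as [_ H]. destruct (H s Hs) as [_ [Hnn [HN1 _]]].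
  exists (/ Nrm (vD T s)). rewrite <- frenet_T'; auto. split; auto.
  apply Rinv_neq_0_compat. unfold Nrm. intros Hc. apply sqrt_eq_0 in Hc.
  - apply Hnn. apply Rabs_eq_0; auto.
  - apply Rabs_pos.
Qed.

Lemma frenet_ortho s : I s ->
  hm (T s) (T s) ^ 2 = 1 /\ hm (N2 s) (N2 s) ^ 2 = 1 /\ hm (N1 s) (N1 s) <> 0 /\
  hm (T s) (N1 s) = 0 /\ hm (T s) (N2 s) = 0 /\ hm (N1 s) (N2 s) = 0.
Proof.
  intros Hs. destruct (frenet_N1_acc s Hs) as [k [Hk HN1]].
  destruct HF as [_ H]. destruct (H s Hs) as [_ [_ [_ [H1 [H2 H3]]]]].
  pose proof (unit_speed_T_T' I alpha s HI Hsm Hu Hs) as K.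
  pose proof (frenet_acc_nonnull s Hs) as Hnn.
  rewrite frenet_T by auto.
  split; [apply Nrm_eq_1, Hu; auto|]. split.
  { rewrite <- (pow2_abs (hm (N2 s) (N2 s))), H1; ring. }
  split.
  { rewrite HN1, hm_scall, hm_scalr. intros Hc.
    repeat apply Rmult_integral in Hc as [Hc|Hc]; contradiction. }
  split; [rewrite HN1, hm_scalr, K; ring|].
  split; rewrite hm_sym; [rewrite <- frenet_T|]; auto.
Qed.

Lemma hm_acc_N1 s : I s -> (hm (alpha s) (vD (vD alpha) s) = 0 <-> hm (alpha s) (N1 s) = 0).
Proof.
  intros Hs. destruct (frenet_N1_acc s Hs) as [k [Hk HN1]]. rewrite HN1, hm_scalr. split.
  - intros ->; ring.
  - intros Hc. apply Rmult_integral in Hc as [Hc|Hc]; [contradiction | auto].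
Qed.

End Frenet.

Lemma rectifying_with_mono I alpha (P Q : V3 -> V3 -> Prop) :
  (forall u v, P u v -> Q u v) -> rectifying_with I alpha P -> rectifying_with I alpha Q.
Proof.
  intros HPQ [T [N1 [N2 [lam [mu [HF [Hd HP]]]]]]].
  exists T, N1, N2, lam, mu. auto.
Qed.

Lemma rectifying_acc_ortho I alpha P : open I -> vsmooth I alpha -> unit_speed I alpha ->
  rectifying_with I alpha P -> forall s, I s -> hm (alpha s) (vD (vD alpha) s) = 0.
Proof.
  intros HI Hsm Hu [T [N1 [N2 [lam [mu [HF [Hd _]]]]]]] s Hs.
  apply (hm_acc_N1 I alpha T N1 N2); auto.
  destruct (Hd s Hs) as [_ [_ ->]].
  destruct (frenet_ortho I alpha T N1 N2 HI Hsm Hu HF s Hs) as [_ [_ [_ [H1 [_ H2]]]]].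
  rewrite hm_addl, !hm_scall, H1, hm_sym, H2. ring.
Qed.

Lemma acc_ortho_rectifying I alpha T N1 N2 (P : V3 -> V3 -> Prop) eT n2 :
  open I -> vsmooth I alpha -> unit_speed I alpha -> frenet_frame I alpha T N1 N2 ->
  eT ^ 2 = 1 -> n2 ^ 2 = 1 ->
  (forall s, I s -> hm (alpha s) (vD (vD alpha) s) = 0) ->
  (forall s, I s -> hm (T s) (T s) = eT) ->
  (forall s, I s -> hm (N2 s) (N2 s) = n2) ->
  (forall s, I s -> P (T s) (N2 s)) ->
  rectifying_with I alpha P.
Proof.
  intros HI Hsm Hu HF HeT Hn2 HX HTT HNN HP.
  exists T, N1, N2, (fun s => eT * hm (alpha s) (vD alpha s)),
    (fun s => n2 * hm (alpha s) (N2 s)).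
  split; auto. split; auto. intros s Hs. split; [|split].
  - eexists. apply (is_derive_scal (fun s => hm (alpha s) (vD alpha s))).
    apply is_derive_hm; [apply vsmooth_is_vderive with I | apply vsmooth_is_vderive2 with I]; auto.
  - eexists. apply (is_derive_scal (fun s => hm (alpha s) (N2 s))).
    destruct HF as [HN2 _].
    apply is_derive_hm; apply vsmooth_is_vderive with I; auto.
  - destruct (frenet_ortho I alpha T N1 N2 HI Hsm Hu HF s Hs) as [_ [_ [HN1 [H1 [H2 H3]]]]].
    rewrite (hm_ortho_expansion (alpha s) (T s) (N1 s) (N2 s)) at 1; auto.
    2: rewrite HTT; auto; apply sign_neq0; auto.
    2: rewrite HNN; auto; apply sign_neq0; auto.
    assert (E : hm (alpha s) (N1 s) = 0) by (apply (hm_acc_N1 I alpha T N1 N2); auto).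
    rewrite E, HTT, HNN, <- (frenet_T I alpha T N1 N2) by auto.
    apply V3_eq; simpl; unfold Rdiv; rewrite (sign_inv eT), (sign_inv n2) by auto; ring.
Qed.

(** * From the representation to the rectifying condition *)

(* The constant [eT = e1 g'^2 + e2 g^2] turns out to be the causal character
   of the tangent of [alpha]. *)
Section Converse.
Variables (I J : R -> Prop) (alpha T N1 N2 y : R -> V3) (phi g g1 g2 : R -> R)
  (a e1 e2 eT : R).
Hypotheses (HI : open I) (Hsm : vsmooth I alpha) (Hu : unit_speed I alpha)
  (HF : frenet_frame I alpha T N1 N2) (HJ : open J) (Hrep : reparam J I phi)
  (Hys : vsmooth J y) (Ha : 0 < a)
  (Hg : forall t : R, is_derive g t (g1 t)) (Hg1 : forall t : R, is_derive g1 t (g2 t))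
  (Hg2 : forall t, g2 t = - (e1 * e2) * g t)
  (HeT : forall t, eT = e1 * g1 t ^ 2 + e2 * g t ^ 2)
  (He1 : e1 ^ 2 = 1) (He2 : e2 ^ 2 = 1) (HeT1 : eT ^ 2 = 1)
  (Hy : forall t, J t -> hm (y t) (y t) = e1 /\ hm (vD y t) (vD y t) = e2 /\ g t <> 0 /\
                         alpha (phi t) = vscal (a / g t) (y t)).

Lemma reparam_derive t : J t -> I (phi t) /\ Derive phi t <> 0 /\
  is_derive phi t (Derive phi t) /\ is_derive (Derive phi) t (Derive (Derive phi) t).
Proof.
  intros Ht. destruct Hrep as [Hs [Hm _]]. destruct (Hm t Ht) as [H1 H2].
  split; [auto|split; [auto|split]]; apply Derive_correct;
    [exact (Hs t Ht 1%nat) | exact (Hs t Ht 2%nat)].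
Qed.

Lemma pos_vel_ortho t : J t -> hm (y t) (vD y t) = 0.
Proof.
  intros Ht. pose proof (vsmooth_is_vderive J y t Hys Ht) as Hd.
  assert (E : hm (vD y t) (y t) + hm (y t) (vD y t) = 0).
  { apply (is_derive_unique_on J (fun t => hm (y t) (y t)) (fun _ => e1) t); auto.
    - intros; apply Hy; auto.
    - apply is_derive_hm; auto.
    - apply is_derive_Rconst. }
  rewrite hm_sym in E. lra.
Qed.

Lemma is_derive_inv_pow (k : R) n t : g t <> 0 ->
  is_derive (fun t => k / g t ^ S n) t (- k * INR (S n) * g1 t * g t ^ n / g t ^ (2 * S n)).
Proof.
  intros Hz. eapply is_derive_rewrite.
  - apply (is_derive_scal (fun t => / g t ^ S n)), is_derive_inv; [apply is_derive_pow, Hg|].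
    apply pow_nonzero; auto.
  - simpl Init.Nat.pred. replace (2 * S n)%nat with (S n + S n)%nat by lia.
    rewrite pow_add. field. apply pow_nonzero; auto.
Qed.

Lemma reparam_velocity t : J t ->
  vscal (Derive phi t) (vD alpha (phi t)) =
  vadd (vscal (- a * g1 t / g t ^ 2) (y t)) (vscal (a / g t) (vD y t)).
Proof.
  intros Ht. destruct (reparam_derive t Ht) as [HIt [_ [Hp _]]].
  destruct (Hy t Ht) as [_ [_ [Hz Heq]]].
  apply (is_vderive_unique (fun t => alpha (phi t)) t).
  - apply is_vderive_comp; auto. apply vsmooth_is_vderive with I; auto.
  - apply (is_vderive_ext J (fun t => vscal (a / g t) (y t))); auto.
    + intros t' Ht'. symmetry; apply Hy; auto.
    + apply (is_vderive_scal (fun t => a / g t) y); [|apply vsmooth_is_vderive with J; auto].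
      eapply is_derive_rewrite; [apply (is_derive_scal (fun t => / g t)), is_derive_inv; auto|].
      field; auto.
Qed.

Lemma reparam_invariants t : J t ->
  hm (vD alpha (phi t)) (vD alpha (phi t)) = eT /\ Derive phi t ^ 2 = a ^ 2 / g t ^ 4 /\
  Derive phi t * hm (alpha (phi t)) (vD alpha (phi t)) = - a ^ 2 * e1 * g1 t / g t ^ 3 /\
  hm (alpha (phi t)) (alpha (phi t)) = a ^ 2 * e1 / g t ^ 2.
Proof.
  intros Ht. destruct (reparam_derive t Ht) as [HIt [Hp0 _]].
  destruct (Hy t Ht) as [Hyy [Hy'y' [Hz Heq]]].
  pose proof (pos_vel_ortho t Ht) as Hyy'.
  pose proof (reparam_velocity t Ht) as Hv.
  set (p := Derive phi t) in *. set (E := hm (vD alpha (phi t)) (vD alpha (phi t))).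
  assert (HE : E ^ 2 = 1) by (apply Nrm_eq_1, Hu; auto).
  assert (K1 : p ^ 2 * E = a ^ 2 / g t ^ 4 * eT).
  { replace (p ^ 2 * E) with (hm (vscal p (vD alpha (phi t))) (vscal p (vD alpha (phi t))))
      by (unfold E; rewrite hm_scall, hm_scalr; ring).
    rewrite Hv, !hm_addl, !hm_addr, !hm_scall, !hm_scalr, (hm_sym (vD y t) (y t)),
      Hyy, Hy'y', Hyy', (HeT t). field; auto. }
  assert (Hc : 0 < a ^ 2 / g t ^ 4).
  { replace (g t ^ 4) with ((g t ^ 2) ^ 2) by ring.
    apply Rdiv_lt_0_compat; apply sq_pos; [lra | apply pow_nonzero; auto]. }
  assert (HEe : E = eT) by (apply (sign_eq_of_mul E eT (p ^ 2) (a ^ 2 / g t ^ 4)); auto;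
                            apply pow2_ge_0).
  split; [auto|split; [|split]].
  - rewrite HEe in K1. apply (Rmult_eq_reg_r eT); auto using sign_neq0.
  - replace (p * hm (alpha (phi t)) (vD alpha (phi t)))
      with (hm (alpha (phi t)) (vscal p (vD alpha (phi t)))) by (rewrite hm_scalr; ring).
    rewrite Hv, Heq, !hm_addr, !hm_scall, !hm_scalr, Hyy, Hyy'. field; auto.
  - rewrite Heq, hm_scall, hm_scalr, Hyy. field; auto.
Qed.

Lemma reparam_speed_derive t : J t ->
  Derive phi t * Derive (Derive phi) t = - 2 * a ^ 2 * g1 t / g t ^ 5.
Proof.
  intros Ht. destruct (reparam_derive t Ht) as [_ [_ [_ Hq]]].
  destruct (Hy t Ht) as [_ [_ [Hz _]]].
  assert (K : Derive (Derive phi) t * Derive phi t + Derive phi t * Derive (Derive phi) t =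
              - a ^ 2 * INR 4 * g1 t * g t ^ 3 / g t ^ (2 * 4)).
  { apply (is_derive_unique_on J (fun t => Derive phi t * Derive phi t)
             (fun t => a ^ 2 / g t ^ 4) t); auto.
    - intros t' Ht'. destruct (reparam_invariants t' Ht') as [_ [E _]]. rewrite <- E. ring.
    - apply Derive.is_derive_mult; apply Hq.
    - apply (is_derive_inv_pow (a ^ 2) 3 t Hz). }
  simpl (INR 4) in K. simpl (2 * 4)%nat in K.
  apply (Rmult_eq_reg_l 2); [|lra]. rewrite <- Rmult_assoc.
  replace (2 * Derive phi t * Derive (Derive phi) t)
    with (Derive (Derive phi) t * Derive phi t + Derive phi t * Derive (Derive phi) t) by ring.
  rewrite K. field; auto.
Qed.

Lemma reparam_radial_derive t : J t ->
  (eT + hm (alpha (phi t)) (vD (vD alpha) (phi t))) * Derive phi t ^ 2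
    + hm (alpha (phi t)) (vD alpha (phi t)) * Derive (Derive phi) t
  = - a ^ 2 * e1 * (g2 t * g t ^ 3 - 3 * g1 t ^ 2 * g t ^ 2) / g t ^ 6.
Proof.
  intros Ht. destruct (reparam_derive t Ht) as [HIt [_ [Hp Hq]]].
  destruct (Hy t Ht) as [_ [_ [Hz _]]].
  destruct (reparam_invariants t Ht) as [HE _].
  rewrite <- HE.
  apply (is_derive_unique_on J (fun t => hm (alpha (phi t)) (vD alpha (phi t)) * Derive phi t)
       (fun t => - a ^ 2 * e1 * g1 t * / g t ^ 3) t); auto.
  - intros t' Ht'. destruct (reparam_invariants t' Ht') as [_ [_ [E _]]].
    destruct (Hy t' Ht') as [_ [_ [Hz' _]]]. rewrite Rmult_comm, E. field; auto.
  - eapply is_derive_rewrite.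
    + apply Derive.is_derive_mult; [|apply Hq].
      apply (is_derive_Rcomp (fun s => hm (alpha s) (vD alpha s)) phi); [|apply Hp].
      apply is_derive_hm;
        [apply vsmooth_is_vderive with I | apply vsmooth_is_vderive2 with I]; auto.
    + cbv beta. ring.
  - eapply is_derive_rewrite.
    + apply (Derive.is_derive_mult (fun t => - a ^ 2 * e1 * g1 t) (fun t => / g t ^ 3)).
      * apply is_derive_scal, Hg1.
      * apply is_derive_inv; [apply is_derive_pow, Hg | apply pow_nonzero; auto].
    + cbv beta. simpl (INR 3); simpl Init.Nat.pred. field; auto.
Qed.

(* Solve the derivative of [phi' h(alpha,alpha') o phi = - a^2 e1 g' / g^3] for
   [h(alpha,alpha'')]: with [g'' = - e1 e2 g] it reduces to [eT + h(alpha,alpha'') = eT]. *)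
Lemma reparam_acc_ortho t : J t -> hm (alpha (phi t)) (vD (vD alpha) (phi t)) = 0.
Proof.
  intros Ht. destruct (reparam_derive t Ht) as [_ [Hp0 _]].
  destruct (Hy t Ht) as [_ [_ [Hz _]]].
  destruct (reparam_invariants t Ht) as [_ [Hp2 [HpH _]]].
  pose proof (reparam_speed_derive t Ht) as Hpq.
  pose proof (reparam_radial_derive t Ht) as KM.
  set (p := Derive phi t) in *. set (q := Derive (Derive phi) t) in *.
  set (X := hm (alpha (phi t)) (vD (vD alpha) (phi t))) in *.
  set (H := hm (alpha (phi t)) (vD alpha (phi t))) in *.
  assert (Hq : H * q = 2 * a ^ 2 * e1 * g1 t ^ 2 / g t ^ 4).
  { apply (Rmult_eq_reg_l (p ^ 2)); [|apply pow_nonzero; auto].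
    replace (p ^ 2 * (H * q)) with ((p * H) * (p * q)) by ring.
    rewrite HpH, Hpq, Hp2. field; auto. }
  rewrite Hq, Hp2, Hg2 in KM.
  assert (E11 : e1 * e1 = 1) by (simpl in He1; lra).
  assert (Hc : a ^ 2 / g t ^ 4 <> 0).
  { apply Rgt_not_eq, Rdiv_lt_0_compat; [apply sq_pos; lra|].
    replace (g t ^ 4) with ((g t ^ 2) ^ 2) by ring. apply sq_pos, pow_nonzero; auto. }
  assert (KX : (eT + X) * (a ^ 2 / g t ^ 4) = eT * (a ^ 2 / g t ^ 4)).
  { rewrite (HeT t) at 2. apply (Rplus_eq_reg_r (2 * a ^ 2 * e1 * g1 t ^ 2 / g t ^ 4)).
    rewrite KM. replace (e2 * g t ^ 2) with ((e1 * e1) * e2 * g t ^ 2) by (rewrite E11; ring).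
    field; auto. }
  apply Rmult_eq_reg_r in KX; auto. lra.
Qed.

Lemma converse_N2_char t : J t -> hm (N2 (phi t)) (N2 (phi t)) = eT * e1 * e2.
Proof.
  intros Ht. destruct (reparam_derive t Ht) as [HIt [Hp0 _]].
  destruct (Hy t Ht) as [_ [_ [Hz _]]].
  destruct (reparam_invariants t Ht) as [HE [Hp2 [HpH HFF]]].
  assert (E11 : e1 * e1 = 1) by (simpl in He1; lra).
  assert (Ea : eT * eT = 1) by (simpl in HeT1; lra).
  destruct (frenet_ortho I alpha T N1 N2 HI Hsm Hu HF (phi t) HIt)
    as [HT2 [HN22 [HN1 [H1 [H2 H3]]]]].
  assert (HXN : hm (alpha (phi t)) (N1 (phi t)) = 0)
    by (apply (hm_acc_N1 I alpha T N1 N2); auto; apply reparam_acc_ortho; auto).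
  pose proof (hm_ortho_norm (alpha (phi t)) (T (phi t)) (N1 (phi t)) (N2 (phi t)) H1 H2 H3
     (sign_neq0 _ HT2) HN1 (sign_neq0 _ HN22) HXN) as HD.
  rewrite (frenet_T I alpha T N1 N2), HE, HFF in HD by auto.
  set (n2 := hm (N2 (phi t)) (N2 (phi t))) in *.
  set (m := hm (alpha (phi t)) (N2 (phi t)) ^ 2) in *.
  set (H := hm (alpha (phi t)) (vD alpha (phi t))) in *.
  assert (HH2 : H ^ 2 = a ^ 2 * g1 t ^ 2 / g t ^ 2).
  { apply (Rmult_eq_reg_l (Derive phi t ^ 2)); [|apply pow_nonzero; auto].
    replace (Derive phi t ^ 2 * H ^ 2) with ((Derive phi t * H) ^ 2) by ring.
    rewrite HpH, Hp2.
    replace ((- a ^ 2 * e1 * g1 t / g t ^ 3) ^ 2) with (a ^ 4 * (e1 * e1) * g1 t ^ 2 / g t ^ 6)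
      by (field; auto).
    rewrite E11. field; auto. }
  rewrite HH2 in HD. unfold Rdiv in HD. rewrite (sign_inv eT), (sign_inv n2) in HD by auto.
  apply (sign_eq_of_mul n2 (eT * e1 * e2) m (a ^ 2)); auto.
  - rewrite !Rpow_mult_distr, HeT1, He1, He2; ring.
  - unfold m; apply pow2_ge_0.
  - apply sq_pos; lra.
  - assert (E1 : m * n2 = a ^ 2 * (e1 - eT * g1 t ^ 2) / g t ^ 2).
    { apply (Rplus_eq_reg_l (a ^ 2 * g1 t ^ 2 * / g t ^ 2 * eT)). rewrite <- HD. field; auto. }
    assert (E2 : e1 - eT * g1 t ^ 2 = eT * e1 * e2 * g t ^ 2).
    { replace (eT * e1 * e2 * g t ^ 2) with (eT * e1 * (e2 * g t ^ 2)) by ring.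
      replace (e2 * g t ^ 2) with (eT - e1 * g1 t ^ 2) by (rewrite (HeT t); ring).
      replace (eT * e1 * (eT - e1 * g1 t ^ 2))
        with ((eT * eT) * e1 - eT * (e1 * e1) * g1 t ^ 2) by ring.
      rewrite Ea, E11. ring. }
    rewrite E1, E2. field; auto.
Qed.

Lemma converse_invariants s : I s ->
  hm (T s) (T s) = eT /\ hm (alpha s) (vD (vD alpha) s) = 0 /\
  0 < e1 * hm (alpha s) (alpha s) /\ hm (N2 s) (N2 s) = eT * e1 * e2.
Proof.
  intros Hs. destruct Hrep as [_ [_ [Hsurj _]]]. destruct (Hsurj s Hs) as [t [Ht <-]].
  destruct (Hy t Ht) as [_ [_ [Hz _]]].
  destruct (reparam_invariants t Ht) as [HE [_ [_ HFF]]].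
  destruct (reparam_derive t Ht) as [HIt _].
  rewrite (frenet_T I alpha T N1 N2) by auto.
  split; [auto|split; [apply reparam_acc_ortho; auto|split; [|apply converse_N2_char; auto]]].
  rewrite HFF. replace (e1 * (a ^ 2 * e1 / g t ^ 2)) with (a ^ 2 * (e1 * e1) / g t ^ 2)
    by (field; auto).
  replace (e1 * e1) with 1 by (simpl in He1; lra).
  rewrite Rmult_1_r. apply Rdiv_lt_0_compat; apply sq_pos; [lra | auto].
Qed.

End Converse.

Lemma rep_form_rectifying I alpha (g g1 g2 : R -> R) (e1 e2 eT : R) (C S : V3 -> Prop) :
  is_open_itv I -> vsmooth I alpha -> unit_speed I alpha -> has_nonnull_frenet_frame I alpha ->
  (forall t : R, is_derive g t (g1 t)) -> (forall t : R, is_derive g1 t (g2 t)) ->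
  (forall t : R, g2 t = - (e1 * e2) * g t) -> (forall t : R, eT = e1 * g1 t ^ 2 + e2 * g t ^ 2) ->
  e1 ^ 2 = 1 -> e2 ^ 2 = 1 -> eT ^ 2 = 1 ->
  (forall v, C v -> hm v v ^ 2 = 1 -> hm v v = e2) -> (forall x, S x -> hm x x = e1) ->
  rep_form I alpha g C S ->
  (forall s, I s -> hm (vD alpha s) (vD alpha s) = eT) /\
  (forall s, I s -> 0 < e1 * hm (alpha s) (alpha s)) /\
  rectifying_with I alpha (fun u v => hm u u = eT /\ hm v v = eT * e1 * e2 /\ hm u v = 0).
Proof.
  intros HIi Hsm Hu [T [N1 [N2 HF]]] Hg Hg1 Hg2 HeT He1 He2 HeT1 HC HS
    [J [phi [y [a [HJi [Hrep [Ha [Hys [Huy Hy]]]]]]]]].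
  pose proof (open_itv_open I HIi) as HI.
  assert (Hy' : forall t, J t -> hm (y t) (y t) = e1 /\ hm (vD y t) (vD y t) = e2 /\
                               g t <> 0 /\ alpha (phi t) = vscal (a / g t) (y t)).
  { intros t Ht. destruct (Hy t Ht) as [HC' [HS' [Hg0 Ha']]].
    repeat split; auto. apply HC; auto. apply Nrm_eq_1, Huy; auto. }
  pose proof (converse_invariants I J alpha T N1 N2 y phi g g1 g2 a e1 e2 eT HI Hsm Hu HF
     (open_itv_open J HJi) Hrep Hys Ha Hg Hg1 Hg2 HeT He1 He2 HeT1 Hy') as K.
  split; [|split].
  - intros s Hs. rewrite <- (frenet_T I alpha T N1 N2) by auto. apply K; auto.
  - intros s Hs. apply K; auto.
  - apply (acc_ortho_rectifying I alpha T N1 N2 _ eT (eT * e1 * e2)); auto.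
    + rewrite !Rpow_mult_distr, HeT1, He1, He2; ring.
    + intros s Hs; apply K; auto.
    + intros s Hs; apply K; auto.
    + intros s Hs; apply K; auto.
    + intros s Hs. destruct (K s Hs) as [H1 [_ [_ H2]]].
      destruct (frenet_ortho I alpha T N1 N2 HI Hsm Hu HF s Hs) as [_ [_ [_ [_ [H3 _]]]]].
      auto.
Qed.

Section ConverseCases.
Variables (I : R -> Prop) (alpha : R -> V3).
Hypotheses (HIi : is_open_itv I) (Hsm : vsmooth I alpha) (Hu : unit_speed I alpha)
  (Hfr : has_nonnull_frenet_frame I alpha).

Lemma rep_form_cos_rectifying :
  rep_form I alpha cos spacelike in_S21 -> rectifying_with I alpha spacelike_plane.
Proof.
  intros Hr.
  destruct (rep_form_rectifying I alpha cos (fun t => - sin t) (fun t => - cos t) 1 1 1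
    spacelike in_S21 HIi Hsm Hu Hfr is_derive_cos is_derive_opp_sin) as [_ [_ Hrec]];
    auto; try (intros; ring).
  - intros t. pose proof (sin_cos_sq t). nra.
  - intros v Hv H2; apply spacelike_unit; auto.
  - revert Hrec. apply rectifying_with_mono. intros u v [H1 [H2 H3]].
    apply spacelike_plane_intro; auto. rewrite H2; ring.
Qed.

Lemma timelike_plane_of_chars eT e1 e2 u v : eT ^ 2 = 1 -> e1 * e2 = -1 ->
  hm u u = eT /\ hm v v = eT * e1 * e2 /\ hm u v = 0 -> timelike_plane u v.
Proof.
  intros HeT He [H1 [H2 H3]]. apply timelike_plane_intro; auto.
  - rewrite H1; auto.
  - rewrite H1, H2, Rmult_assoc, He. ring.
Qed.

Lemma rep_form_sinh_rectifying eps (C S : V3 -> Prop) : eps ^ 2 = 1 ->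
  (forall v, C v -> hm v v ^ 2 = 1 -> hm v v = - eps) -> (forall x, S x -> hm x x = eps) ->
  rep_form I alpha sinh C S ->
  (forall s, I s -> hm (vD alpha s) (vD alpha s) = eps) /\
  (forall s, I s -> 0 < eps * hm (alpha s) (alpha s)) /\
  rectifying_with I alpha timelike_plane.
Proof.
  intros Heps HC HS Hr.
  assert (He : eps * - eps = -1) by (simpl in Heps; lra).
  destruct (rep_form_rectifying I alpha sinh cosh sinh eps (- eps) eps C S
    HIi Hsm Hu Hfr is_derive_sinh is_derive_cosh) as [H1 [H2 Hrec]]; auto.
  - intros; rewrite He; ring.
  - intros t. rewrite <- (Rmult_1_r eps) at 1. rewrite <- (cosh_sinh_sq t). ring.
  - rewrite <- Heps; ring.
  - repeat split; auto. revert Hrec. apply rectifying_with_mono.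
    intros u v. apply timelike_plane_of_chars; auto.
Qed.

Lemma rep_form_cosh_rectifying eps (C S : V3 -> Prop) : eps ^ 2 = 1 ->
  (forall v, C v -> hm v v ^ 2 = 1 -> hm v v = eps) -> (forall x, S x -> hm x x = - eps) ->
  rep_form I alpha cosh C S ->
  (forall s, I s -> hm (vD alpha s) (vD alpha s) = eps) /\
  (forall s, I s -> 0 < - eps * hm (alpha s) (alpha s)) /\
  rectifying_with I alpha timelike_plane.
Proof.
  intros Heps HC HS Hr.
  assert (He : - eps * eps = -1) by (simpl in Heps; lra).
  destruct (rep_form_rectifying I alpha cosh sinh cosh (- eps) eps eps C S
    HIi Hsm Hu Hfr is_derive_cosh is_derive_sinh) as [H1 [H2 Hrec]]; auto.
  - intros; rewrite He; ring.
  - intros t. rewrite <- (Rmult_1_r eps) at 1. rewrite <- (cosh_sinh_sq t). ring.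
  - rewrite <- Heps; ring.
  - repeat split; auto. revert Hrec. apply rectifying_with_mono.
    intros u v. apply timelike_plane_of_chars; auto.
Qed.

End ConverseCases.

(** * From the rectifying condition to the representation *)

Lemma first_integrals I alpha eT : is_open_itv I -> vsmooth I alpha -> eT ^ 2 = 1 ->
  (forall s, I s -> hm (vD alpha s) (vD alpha s) = eT) ->
  (forall s, I s -> hm (alpha s) (vD (vD alpha) s) = 0) ->
  exists c d, forall s, I s -> hm (alpha s) (vD alpha s) = eT * (s + c) /\
                            hm (alpha s) (alpha s) = eT * (s + c) ^ 2 + d.
Proof.
  intros HIi Hsm HeT HE HX.
  pose proof (open_itv_convex I HIi) as Hc.
  destruct (open_itv_nonempty I HIi) as [s0 Hs0].
  assert (Hee : eT * eT = 1) by (simpl in HeT; lra).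
  set (c := eT * hm (alpha s0) (vD alpha s0) - s0).
  assert (KH : forall s, I s -> hm (alpha s) (vD alpha s) = eT * (s + c)).
  { intros s Hs.
    assert (E : hm (alpha s) (vD alpha s) - eT * s = hm (alpha s0) (vD alpha s0) - eT * s0).
    { apply (derive_zero_const_on_itv I (fun x => hm (alpha x) (vD alpha x) - eT * x)); auto.
      intros t Ht. eapply is_derive_rewrite.
      - apply is_derive_Rminus.
        + apply is_derive_hm;
            [apply vsmooth_is_vderive with I | apply vsmooth_is_vderive2 with I]; auto.
        + apply (is_derive_scal (fun x => x)), is_derive_Rid.
      - rewrite HE, HX by auto. ring. }
    unfold c. replace (eT * (s + (eT * hm (alpha s0) (vD alpha s0) - s0)))
      with (eT * s + (eT * eT) * hm (alpha s0) (vD alpha s0) - eT * s0) by ring.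
    rewrite Hee. lra. }
  exists c, (hm (alpha s0) (alpha s0) - eT * (s0 + c) ^ 2). intros s Hs. split; auto.
  assert (E : hm (alpha s) (alpha s) - eT * (s + c) ^ 2
              = hm (alpha s0) (alpha s0) - eT * (s0 + c) ^ 2).
  { apply (derive_zero_const_on_itv I (fun x => hm (alpha x) (alpha x) - eT * (x + c) ^ 2));
      auto.
    intros t Ht. eapply is_derive_rewrite.
    - apply is_derive_Rminus.
      + apply is_derive_hm; apply vsmooth_is_vderive with I; auto.
      + apply is_derive_scal, (is_derive_pow (fun x => x + c) 2), is_derive_shift.
    - rewrite (hm_sym (vD alpha t) (alpha t)), KH by auto. simpl. ring. }
  lra.
Qed.

Section RectifyingCoefficients.
Variables (I : R -> Prop) (alpha T N1 N2 : R -> V3) (lam mu : R -> R) (eT c d : R).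
Hypotheses (HI : open I) (Hsm : vsmooth I alpha) (Hu : unit_speed I alpha)
  (HF : frenet_frame I alpha T N1 N2) (HeT : eT ^ 2 = 1)
  (HE : forall s, I s -> hm (vD alpha s) (vD alpha s) = eT)
  (Hdec : forall s, I s -> alpha s = vadd (vscal (lam s) (T s)) (vscal (mu s) (N2 s)))
  (Hint : forall s, I s -> hm (alpha s) (vD alpha s) = eT * (s + c) /\
                           hm (alpha s) (alpha s) = eT * (s + c) ^ 2 + d).

Lemma rectifying_coeffs s : I s -> lam s = s + c /\ mu s ^ 2 * hm (N2 s) (N2 s) = d.
Proof.
  intros Hs. pose proof (Hdec s Hs) as Ha.
  destruct (frenet_ortho I alpha T N1 N2 HI Hsm Hu HF s Hs) as [_ [_ [_ [_ [H2 _]]]]].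
  destruct (Hint s Hs) as [KH KF].
  pose proof (HE s Hs) as HEs. rewrite <- (frenet_T I alpha T N1 N2 HF s Hs) in KH, HEs.
  assert (Hl : lam s = s + c).
  { rewrite Ha, hm_addl, !hm_scall, (hm_sym (N2 s) (T s)), H2, HEs in KH.
    apply (Rmult_eq_reg_l eT); [lra | apply sign_neq0; auto]. }
  split; auto.
  rewrite Ha in KF at 2. rewrite hm_addr, !hm_scalr, KH, Ha, hm_addl, !hm_scall, H2, Hl in KF.
  lra.
Qed.

(* If [d = 0] then [mu = 0], so [alpha = (s + c) alpha'] and differentiating gives
   [(s + c) alpha'' = 0]: impossible for non-null [alpha''] on an interval. *)
Lemma rectifying_const_neq0 : is_open_itv I -> d <> 0.
Proof.
  intros HIi Hd0.
  destruct (open_itv_nonempty I HIi) as [s0 Hs0].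
  destruct (open_itv_has_no_max I HIi s0 Hs0) as [s1 [Hs01 Hs1]].
  assert (Ex : exists s, I s /\ s + c <> 0).
  { destruct (Req_dec (s0 + c) 0); [exists s1 | exists s0]; split; auto; lra. }
  destruct Ex as [s [Hs Hsc]].
  assert (Hal : forall t, I t -> alpha t = vscal (t + c) (vD alpha t)).
  { intros t Ht. destruct (rectifying_coeffs t Ht) as [Hl Hm]. rewrite Hd0 in Hm.
    rewrite (Hdec t Ht), Hl.
    destruct (frenet_ortho I alpha T N1 N2 HI Hsm Hu HF t Ht) as [_ [HN22 _]].
    assert (Hmu : mu t = 0).
    { apply Rmult_integral in Hm as [Hm|Hm].
      - apply sq_eq0; auto.
      - exfalso. apply (sign_neq0 _ HN22); auto. }
    rewrite Hmu, (frenet_T I alpha T N1 N2) by auto. apply V3_eq; simpl; ring. }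
  assert (V1 : is_vderive alpha s (vD alpha s)) by (apply vsmooth_is_vderive with I; auto).
  assert (V2 : is_vderive alpha s (vadd (vscal 1 (vD alpha s)) (vscal (s + c) (vD (vD alpha) s)))).
  { apply (is_vderive_ext I (fun t => vscal (t + c) (vD alpha t))); auto.
    - intros; symmetry; auto.
    - apply (is_vderive_scal (fun t => t + c) (vD alpha)); [apply is_derive_shift|].
      apply vsmooth_is_vderive2 with I; auto. }
  pose proof (is_vderive_unique _ _ _ _ V1 V2) as E.
  assert (Z : vD (vD alpha) s = V0).
  { destruct (vD alpha s) as [x1 x2 x3], (vD (vD alpha) s) as [z1 z2 z3].
    simpl in E. injection E as E1 E2 E3.
    unfold V0; f_equal; apply (Rmult_eq_reg_l (s + c)); auto; lra. }
  apply (frenet_acc_nonnull I alpha T N1 N2 HI Hsm HF s Hs). rewrite Z. apply hm_0l.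
Qed.

End RectifyingCoefficients.

Lemma rectifying_first_integrals I alpha P eT : is_open_itv I -> vsmooth I alpha ->
  unit_speed I alpha -> eT ^ 2 = 1 ->
  (forall s, I s -> hm (vD alpha s) (vD alpha s) = eT) -> rectifying_with I alpha P ->
  exists c d,
    (forall s, I s -> hm (alpha s) (vD alpha s) = eT * (s + c) /\
                      hm (alpha s) (alpha s) = eT * (s + c) ^ 2 + d) /\
    (forall s, I s -> exists n, P (vD alpha s) n /\ hm (vD alpha s) n = 0 /\
                                hm n n ^ 2 = 1 /\ 0 < d * hm n n).
Proof.
  intros HIi Hsm Hu HeT HE Hrec.
  pose proof (open_itv_open I HIi) as HI.
  destruct (first_integrals I alpha eT HIi Hsm HeT HE
              (rectifying_acc_ortho I alpha P HI Hsm Hu Hrec)) as [c [d Hint]].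
  destruct Hrec as [T [N1 [N2 [lam [mu [HF [Hd HP]]]]]]].
  assert (Hdec : forall s, I s -> alpha s = vadd (vscal (lam s) (T s)) (vscal (mu s) (N2 s)))
    by (intros s Hs; apply Hd; auto).
  pose proof (rectifying_const_neq0 I alpha T N1 N2 lam mu eT c d HI Hsm Hu HF HeT HE Hdec Hint HIi)
    as Hd0.
  exists c, d. split; [auto|]. intros s Hs. exists (N2 s).
  destruct (rectifying_coeffs I alpha T N1 N2 lam mu eT c d HI Hsm Hu HF HeT HE Hdec Hint s Hs)
    as [_ Hm].
  destruct (frenet_ortho I alpha T N1 N2 HI Hsm Hu HF s Hs) as [_ [HN22 [_ [_ [H2 _]]]]].
  rewrite <- (frenet_T I alpha T N1 N2 HF s Hs).
  split; [auto|split; [auto|split; [auto|]]].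
  rewrite <- Hm.
  replace (mu s ^ 2 * hm (N2 s) (N2 s) * hm (N2 s) (N2 s))
    with (mu s ^ 2 * hm (N2 s) (N2 s) ^ 2) by ring.
  rewrite HN22, Rmult_1_r. apply sq_pos. intros Hmu. apply Hd0. rewrite <- Hm, Hmu. ring.
Qed.

Lemma spacelike_rectifying_first_integrals I alpha : is_open_itv I -> vsmooth I alpha ->
  unit_speed I alpha -> rectifying_with I alpha spacelike_plane ->
  (forall s, I s -> hm (vD alpha s) (vD alpha s) = 1) /\
  exists c a, 0 < a /\ forall s, I s ->
    hm (alpha s) (vD alpha s) = 1 * (s + c) /\ hm (alpha s) (alpha s) = 1 * (s + c) ^ 2 + 1 * a ^ 2.
Proof.
  intros HIi Hsm Hu Hrec.
  assert (HE : forall s, I s -> hm (vD alpha s) (vD alpha s) = 1).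
  { intros s Hs. destruct Hrec as [T [N1 [N2 [_ [_ [HF [_ HP]]]]]]].
    pose proof (HP s Hs 1 0 (or_introl R1_neq_R0)) as K.
    rewrite hm_lin_comb, (frenet_T I alpha T N1 N2 HF s Hs) in K.
    destruct (sign_cases _ (proj1 (Nrm_eq_1 _) (Hu s Hs))) as [E|E]; auto. lra. }
  split; [auto|].
  destruct (rectifying_first_integrals I alpha _ 1 HIi Hsm Hu (pow1 2) HE Hrec)
    as [c [d [Hint Hsign]]].
  destruct (open_itv_nonempty I HIi) as [s0 Hs0].
  destruct (Hsign s0 Hs0) as [n [HP [_ [Hn Hdn]]]].
  assert (Hnn : hm n n = 1).
  { pose proof (HP 0 1 (or_intror R1_neq_R0)) as K. rewrite hm_lin_comb in K.
    destruct (sign_cases _ Hn) as [E|E]; auto. lra. }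
  rewrite Hnn, Rmult_1_r in Hdn.
  exists c, (sqrt d). split; [apply sqrt_lt_R0; auto|].
  intros s Hs. rewrite pow2_sqrt, (Rmult_1_l d) by lra. apply Hint; auto.
Qed.

Lemma timelike_rectifying_first_integrals I alpha eT : is_open_itv I -> vsmooth I alpha ->
  unit_speed I alpha -> eT ^ 2 = 1 -> (forall s, I s -> hm (vD alpha s) (vD alpha s) = eT) ->
  rectifying_with I alpha timelike_plane ->
  exists c a, 0 < a /\ forall s, I s ->
    hm (alpha s) (vD alpha s) = eT * (s + c) /\
    hm (alpha s) (alpha s) = eT * (s + c) ^ 2 + - eT * a ^ 2.
Proof.
  intros HIi Hsm Hu HeT HE Hrec.
  destruct (rectifying_first_integrals I alpha _ eT HIi Hsm Hu HeT HE Hrec)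
    as [c [d [Hint Hsign]]].
  destruct (open_itv_nonempty I HIi) as [s0 Hs0].
  destruct (Hsign s0 Hs0) as [n [HP [H0 [Hn Hdn]]]].
  rewrite (timelike_plane_ortho _ _ HP H0), HE in Hdn by (rewrite ?HE; auto).
  assert (Hpos : 0 < - eT * d) by lra.
  exists c, (sqrt (- eT * d)). split; [apply sqrt_lt_R0; auto|].
  intros s Hs. rewrite pow2_sqrt by lra.
  replace (- eT * (- eT * d)) with ((eT * eT) * d) by ring.
  replace (eT * eT) with 1 by (simpl in HeT; lra). rewrite (Rmult_1_l d). apply Hint; auto.
Qed.

Lemma first_integrals_position_sign (x v : V3) eT u a k : eT ^ 2 = 1 -> 0 < a ->
  hm x v = eT * u -> hm x x = eT * u ^ 2 + - eT * a ^ 2 ->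
  0 < k * hm x x \/ x = V0 -> 0 < k * eT * (u ^ 2 - a ^ 2).
Proof.
  intros HeT Ha Hv Hx [P | ->].
  - rewrite Hx in P. replace (k * eT * (u ^ 2 - a ^ 2)) with (k * (eT * u ^ 2 + - eT * a ^ 2))
      by ring. auto.
  - exfalso. rewrite hm_0l in Hv, Hx. pose proof (sign_neq0 _ HeT).
    assert (Hu0 : u = 0) by (apply (Rmult_eq_reg_l eT); auto; lra). subst u.
    assert (Hz : eT * a ^ 2 = 0) by lra.
    apply Rmult_integral in Hz as [Hz|Hz]; [auto | apply (pow_nonzero a 2); lra].
Qed.

Lemma sq_gt_same_side I c a : convex I -> (exists s, I s) -> 0 < a ->
  (forall s, I s -> a ^ 2 < (s + c) ^ 2) ->
  exists sg, sg ^ 2 = 1 /\ forall s, I s -> a < sg * (s + c).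
Proof.
  intros Hc [s0 Hs0] Ha H.
  assert (Hc0 : ~ I (- c)) by (intros Hm; pose proof (H (- c) Hm); nra).
  pose proof (H s0 Hs0).
  destruct (Rlt_or_le 0 (s0 + c)); [exists 1 | exists (-1)]; split; try ring;
    intros s Hs; pose proof (H s Hs).
  - destruct (Rlt_or_le a (s + c)); [lra|].
    exfalso. apply Hc0, (Hc s (- c) s0); auto. nra.
  - destruct (Rlt_or_le a (- (s + c))); [lra|].
    exfalso. apply Hc0, (Hc s0 (- c) s); auto. nra.
Qed.

Lemma rescaled_speed_sq X Y u v a eT dl e1 e2 sg : sg ^ 2 = 1 -> e1 ^ 2 = 1 -> e2 ^ 2 = 1 ->
  v <> 0 -> a <> 0 ->
  hm X X = eT * (sg * a * (u / v)) ^ 2 + dl * a ^ 2 -> hm X Y = eT * (sg * a * (u / v)) ->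
  hm Y Y = eT ->
  hm (vadd (vscal (u / a) X)
           (vscal (v / a) (vscal (- sg * a * (u ^ 2 + e1 * e2 * v ^ 2) / v ^ 2) Y)))
     (vadd (vscal (u / a) X)
           (vscal (v / a) (vscal (- sg * a * (u ^ 2 + e1 * e2 * v ^ 2) / v ^ 2) Y)))
  = eT * v ^ 2 + dl * u ^ 2.
Proof.
  intros Hs H1 H2 Hv Ha EXX EXY EYY.
  rewrite !hm_addl, !hm_addr, !hm_scall, !hm_scalr, (hm_sym Y X), EXX, EXY, EYY.
  destruct (sign_cases sg Hs) as [-> | ->]; destruct (sign_cases e1 H1) as [-> | ->];
    destruct (sign_cases e2 H2) as [-> | ->]; field; split; assumption.
Qed.

Section Construction.
Variables (I D : R -> Prop) (alpha : R -> V3) (g g1 g2 psi : R -> R)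
  (a c eT dl e1 e2 sg W : R) (C S : V3 -> Prop).
Hypotheses (HIi : is_open_itv I) (Hsm : vsmooth I alpha)
  (HE : forall s, I s -> hm (vD alpha s) (vD alpha s) = eT)
  (HH : forall s, I s -> hm (alpha s) (vD alpha s) = eT * (s + c))
  (HFf : forall s, I s -> hm (alpha s) (alpha s) = eT * (s + c) ^ 2 + dl * a ^ 2)
  (Ha : 0 < a)
  (Hg : forall t : R, is_derive g t (g1 t)) (Hg1 : forall t : R, is_derive g1 t (g2 t))
  (Hg2 : forall t, g2 t = - (e1 * e2) * g t)
  (HW : forall t, g1 t ^ 2 + e1 * e2 * g t ^ 2 = W) (HW1 : W ^ 2 = 1)
  (Hid1 : forall t, eT * g1 t ^ 2 + dl * g t ^ 2 = e1)
  (Hid2 : forall t, eT * g t ^ 2 + dl * g1 t ^ 2 = e2)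
  (Hsg : sg ^ 2 = 1) (He1 : e1 ^ 2 = 1) (He2 : e2 ^ 2 = 1)
  (Hgs : forall n, Cn n (fun _ => True) g /\ Cn n (fun _ => True) g1)
  (HD : is_open_itv D) (HDg : forall t, D t -> g t <> 0)
  (Hpsi : forall s, I s -> D (psi s) /\ sg * a * (g1 (psi s) / g (psi s)) - c = s)
  (HC : forall v, hm v v = e2 -> C v) (HS : forall x, hm x x = e1 -> S x).

Let phi := fun t => sg * a * (g1 t / g t) - c.
Let J := fun t => D t /\ I (phi t).
Let y := fun t => vscal (g t / a) (alpha (phi t)).

Lemma construct_phi_derive t : g t <> 0 ->
  is_derive phi t (- sg * a * (g1 t ^ 2 + e1 * e2 * g t ^ 2) / g t ^ 2).
Proof.
  intros Hz. unfold phi. eapply is_derive_rewrite.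
  - apply is_derive_Rminus; [|apply is_derive_Rconst].
    apply (is_derive_scal (fun t => g1 t / g t)), Derive.is_derive_mult; [apply Hg1|].
    apply is_derive_inv; auto.
  - rewrite Hg2. field; assumption.
Qed.

(* [phi' = - sg W a / g^2] has the constant sign of [- sg W]. *)
Let k := - sg * W.

Lemma construct_k_sign : k = 1 \/ k = -1.
Proof.
  apply sign_cases. unfold k. replace ((- sg * W) ^ 2) with (sg ^ 2 * W ^ 2) by ring.
  rewrite Hsg, HW1; ring.
Qed.

Lemma construct_phi_mono x z : D x -> D z -> x < z -> k * phi x < k * phi z.
Proof.
  intros Hx Hz Hxz. destruct HD as [lo [hi [Hlh HDe]]].
  apply (incr_function (fun t => k * phi t) lo hi (fun t => a / g t ^ 2)).
  - intros t H1 H2. assert (Ht : D t) by (apply HDe; auto).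
    assert (Hgz : g t <> 0) by (apply HDg; auto).
    eapply is_derive_rewrite; [apply is_derive_scal, construct_phi_derive; auto|].
    rewrite HW. unfold k.
    assert (Hs2 : sg * sg = 1) by (simpl in Hsg; lra).
    assert (Hw2 : W * W = 1) by (simpl in HW1; lra).
    replace (- sg * W * (- sg * a * W / g t ^ 2)) with ((sg * sg) * (W * W) * a / g t ^ 2)
      by (field; assumption).
    rewrite Hs2, Hw2. field; assumption.
  - intros t H1 H2. assert (Ht : D t) by (apply HDe; auto).
    apply Rdiv_lt_0_compat; auto. apply sq_pos; auto.
  - apply HDe; auto.
  - auto.
  - apply HDe; auto.
Qed.

Lemma construct_phi_inj x z : D x -> D z -> phi x = phi z -> x = z.
Proof.
  intros Hx Hz E. destruct (Rtotal_order x z) as [H|[H|H]]; auto.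
  - pose proof (construct_phi_mono x z Hx Hz H). rewrite E in H0. lra.
  - pose proof (construct_phi_mono z x Hz Hx H). rewrite E in H0. lra.
Qed.

Lemma construct_phi_onto s : I s -> J (psi s) /\ phi (psi s) = s.
Proof. intros Hs. destruct (Hpsi s Hs) as [H1 H2]. unfold J, phi. rewrite H2. auto. Qed.

Lemma construct_dom_itv : is_open_itv J.
Proof.
  pose proof (open_itv_convex I HIi) as Ic.
  pose proof (open_itv_has_no_max I HIi) as Iu.
  pose proof (open_itv_has_no_min I HIi) as Id.
  pose proof (open_itv_convex D HD) as Dc.
  assert (Hlt : forall t t', D t -> D t' -> k * phi t < k * phi t' -> t < t').
  { intros t t' Ht Ht' Hk. destruct (Rtotal_order t t') as [H|[H|H]]; auto.
    - subst; lra.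
    - pose proof (construct_phi_mono t' t Ht' Ht H). lra. }
  apply open_itv_intro.
  - destruct (open_itv_nonempty I HIi) as [s Hs]. exists (psi s). apply construct_phi_onto; auto.
  - intros x z w [Hx1 Hx2] [Hw1 Hw2] [Hz1 Hz2].
    assert (Dz : D z) by (apply (Dc x z w); auto; lra). split; auto.
    destruct (Rle_lt_or_eq_dec x z Hz1) as [Hxz|Hxz]; [|subst; auto].
    destruct (Rle_lt_or_eq_dec z w Hz2) as [Hzw|Hzw]; [|subst; auto].
    pose proof (construct_phi_mono x z Hx1 Dz Hxz). pose proof (construct_phi_mono z w Dz Hw1 Hzw).
    destruct construct_k_sign as [Hk|Hk]; rewrite Hk in *.
    + apply (Ic (phi x) (phi z) (phi w)); auto; lra.
    + apply (Ic (phi w) (phi z) (phi x)); auto; lra.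
  - intros t [Ht1 Ht2].
    assert (E : exists s, I s /\ k * phi t < k * s).
    { destruct construct_k_sign as [Hk|Hk]; rewrite Hk;
        [destruct (Iu _ Ht2) as [u [Hu1 Hu2]] | destruct (Id _ Ht2) as [u [Hu1 Hu2]]];
        exists u; split; auto; lra. }
    destruct E as [s [Hs Hks]]. destruct (construct_phi_onto s Hs) as [[H1 H1'] H2].
    exists (psi s). split; [apply Hlt; auto; rewrite H2; auto | split; auto].
  - intros t [Ht1 Ht2].
    assert (E : exists s, I s /\ k * s < k * phi t).
    { destruct construct_k_sign as [Hk|Hk]; rewrite Hk;
        [destruct (Id _ Ht2) as [u [Hu1 Hu2]] | destruct (Iu _ Ht2) as [u [Hu1 Hu2]]];
        exists u; split; auto; lra. }
    destruct E as [s [Hs Hks]]. destruct (construct_phi_onto s Hs) as [[H1 H1'] H2].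
    exists (psi s). split; [apply Hlt; auto; rewrite H2; auto | split; auto].
Qed.

Lemma construct_rescaled_chars t : J t ->
  hm (vD y t) (vD y t) = e2 /\ hm (y t) (y t) = e1.
Proof.
  intros [HDt HIt]. pose proof (HDg t HDt) as Hz.
  assert (Hv : is_vderive y t (vadd (vscal (g1 t / a) (alpha (phi t)))
                 (vscal (g t / a) (vscal (- sg * a * (g1 t ^ 2 + e1 * e2 * g t ^ 2) / g t ^ 2)
                     (vD alpha (phi t)))))).
  { apply (is_vderive_scal (fun t => g t / a) (fun t => alpha (phi t))).
    - eapply is_derive_rewrite.
      + apply (Derive.is_derive_mult g (fun _ => / a)); [apply Hg | apply is_derive_Rconst].
      + unfold Rdiv; ring.
    - apply is_vderive_comp;
        [apply vsmooth_is_vderive with I; auto | apply construct_phi_derive; auto]. }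
  rewrite (is_vderive_vD _ _ _ Hv). unfold y.
  assert (E1 : hm (alpha (phi t)) (alpha (phi t)) = eT * (sg * a * (g1 t / g t)) ^ 2 + dl * a ^ 2).
  { rewrite HFf by auto. unfold phi. f_equal. f_equal. f_equal. ring. }
  assert (E2 : hm (alpha (phi t)) (vD alpha (phi t)) = eT * (sg * a * (g1 t / g t))).
  { rewrite HH by auto. unfold phi. f_equal. ring. }
  split.
  - transitivity (eT * g t ^ 2 + dl * g1 t ^ 2); [|apply Hid2].
    apply rescaled_speed_sq; auto; lra.
  - rewrite <- (Hid1 t), hm_scall, hm_scalr, E1.
    destruct (sign_cases sg Hsg) as [-> | ->]; field; split; lra.
Qed.

Lemma construct_reparam : reparam J I phi.
Proof.
  pose proof (open_itv_open J construct_dom_itv) as HJ.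
  split; [|split; [|split]].
  - apply Cn_rsmooth. intros n.
    apply Cn_minus; auto using Cn_const. apply Cn_mult; auto using Cn_const.
    apply Cn_div; auto.
    + intros t [Ht _]; auto.
    + apply (Cn_subset n (fun _ => True)); auto. apply Hgs.
    + apply (Cn_subset n (fun _ => True)); auto. apply Hgs.
  - intros t [HDt HIt]. split; [auto|].
    rewrite (is_derive_unique _ _ _ (construct_phi_derive t (HDg t HDt))), HW.
    pose proof (sign_neq0 _ Hsg). pose proof (sign_neq0 _ HW1). pose proof (HDg t HDt).
    unfold Rdiv. apply Rmult_integral_contrapositive_currified.
    + repeat apply Rmult_integral_contrapositive_currified; auto using Ropp_neq_0_compat; lra.
    + apply Rinv_neq_0_compat, pow_nonzero; auto.
  - intros s Hs. exists (psi s). apply construct_phi_onto; auto.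
  - intros t1 t2 [H1 _] [H2 _] E. apply construct_phi_inj; auto.
Qed.

Lemma construct_rescaled_smooth : vsmooth J y.
Proof.
  pose proof (open_itv_open J construct_dom_itv) as HJ.
  assert (Hcomp : forall f : V3 -> R, rsmooth I (fun s => f (alpha s)) ->
                    rsmooth J (fun t => g t / a * f (alpha (phi t)))).
  { intros f Hf. apply Cn_rsmooth. intros n. apply Cn_mult; auto.
    - apply Cn_div; auto using Cn_const; [intros; lra|].
      apply (Cn_subset n (fun _ => True)); auto. apply Hgs.
    - apply (Cn_comp n J I (fun s => f (alpha s)) phi); auto.
      + apply open_itv_open; auto.
      + intros t [_ Ht]; auto.
      + apply rsmooth_Cn, Hf. apply open_itv_open; auto.
      + apply rsmooth_Cn; [auto | apply construct_reparam]. }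
  destruct Hsm as [S1 [S2 S3]]. split; [|split]; apply Hcomp; auto.
Qed.

Lemma rep_form_construct : rep_form I alpha g C S.
Proof.
  exists J, phi, y, a.
  split; [apply construct_dom_itv|split; [apply construct_reparam|split; [auto|]]].
  split; [apply construct_rescaled_smooth|split].
  - intros t Ht. apply Nrm_eq_1. rewrite (proj1 (construct_rescaled_chars t Ht)). exact He2.
  - intros t Ht. destruct (construct_rescaled_chars t Ht) as [K1 K2].
    assert (Hz : g t <> 0) by (apply HDg, Ht).
    split; [auto | split; [auto | split; [auto|]]].
    unfold y. apply V3_eq; simpl; field; split; first [assumption | lra].
Qed.

End Construction.

Section ForwardCases.
Variables (I : R -> Prop) (alpha : R -> V3).
Hypotheses (HIi : is_open_itv I) (Hsm : vsmooth I alpha) (Hu : unit_speed I alpha).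

Lemma rectifying_cos_rep_form :
  rectifying_with I alpha spacelike_plane -> rep_form I alpha cos spacelike in_S21.
Proof.
  intros Hrec.
  destruct (spacelike_rectifying_first_integrals I alpha HIi Hsm Hu Hrec)
    as [HE [c [a [Ha Hint]]]].
  pose proof PI_RGT_0.
  assert (Hsmooth : forall n, Cn n (fun _ => True) cos /\ Cn n (fun _ => True) (fun t => - sin t)).
  { intros n. destruct (Cn_sin_cos n _ open_full).
    split; auto. apply Cn_opp; auto using open_full. }
  assert (Hcos : forall t, - (PI / 2) < t < PI / 2 -> cos t <> 0)
    by (intros t Ht; apply Rgt_not_eq, cos_gt_0; apply Ht).
  assert (Hpsi : forall s, I s -> - (PI / 2) < atan (- (s + c) / a) < PI / 2 /\
            1 * a * (- sin (atan (- (s + c) / a)) / cos (atan (- (s + c) / a))) - c = s).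
  { intros s Hs. set (x := - (s + c) / a). pose proof (atan_bound x) as [B1 B2].
    split; [lra|].
    assert (cos (atan x) <> 0) by (apply Hcos; lra).
    replace (- sin (atan x) / cos (atan x)) with (- tan (atan x)) by (unfold tan; field; auto).
    rewrite tan_atan. unfold x. field. lra. }
  apply (rep_form_construct I (fun t => - (PI / 2) < t < PI / 2) alpha cos (fun t => - sin t)
    (fun t => - cos t) (fun s => atan (- (s + c) / a)) a c 1 1 1 1 1 1);
    auto using is_derive_cos, is_derive_opp_sin, open_itv_half_pi.
  all: intros; try apply Hint; auto; try (left; lra); try ring.
  all: pose proof (sin_cos_sq t); nra.
Qed.

Lemma rectifying_sinh_rep_form eps (C S : V3 -> Prop) : eps ^ 2 = 1 ->
  (forall v, hm v v = - eps -> C v) -> (forall x, hm x x = eps -> S x) ->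
  (forall s, I s -> hm (vD alpha s) (vD alpha s) = eps) ->
  rectifying_with I alpha timelike_plane ->
  (forall s, I s -> 0 < eps * hm (alpha s) (alpha s) \/ alpha s = V0) ->
  rep_form I alpha sinh C S.
Proof.
  intros Heps HC HS HE Hrec Hpos.
  destruct (timelike_rectifying_first_integrals I alpha eps HIi Hsm Hu Heps HE Hrec)
    as [c [a [Ha Hint]]].
  assert (Hee : eps * eps = 1) by (simpl in Heps; lra).
  assert (Hgt : forall s, I s -> a ^ 2 < (s + c) ^ 2).
  { intros s Hs. destruct (Hint s Hs) as [KH KF].
    pose proof (first_integrals_position_sign _ _ eps (s + c) a eps Heps Ha KH KF (Hpos s Hs)).
    rewrite Hee in H. lra. }
  destruct (sq_gt_same_side I c a (open_itv_convex I HIi) (open_itv_nonempty I HIi) Ha Hgt)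
    as [sg [Hsg Hside]].
  assert (Hsmooth : forall n, Cn n (fun _ => True) sinh /\ Cn n (fun _ => True) cosh)
    by (intros n; apply Cn_sinh_cosh, open_full).
  assert (Hsinh : forall t, 0 < t -> sinh t <> 0)
    by (intros t Ht; apply Rgt_not_eq, sinh_pos; auto).
  assert (Hpsi : forall s, I s -> 0 < arcoth (sg * (s + c) / a) /\
    sg * a * (cosh (arcoth (sg * (s + c) / a)) / sinh (arcoth (sg * (s + c) / a))) - c = s).
  { intros s Hs. assert (Hx : 1 < sg * (s + c) / a).
    { apply (Rmult_lt_reg_r a); auto. rewrite Rmult_1_l.
      replace (sg * (s + c) / a * a) with (sg * (s + c)) by (field; lra). apply Hside; auto. }
    destruct (coth_arcoth _ Hx) as [H1 H2]. split; auto. rewrite H2.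
    replace (sg * a * (sg * (s + c) / a) - c) with ((sg * sg) * (s + c) - c) by (field; lra).
    replace (sg * sg) with 1 by (simpl in Hsg; lra). ring. }
  apply (rep_form_construct I (fun t => 0 < t) alpha sinh cosh sinh
    (fun s => arcoth (sg * (s + c) / a)) a c eps (- eps) eps (- eps) sg 1);
    auto using is_derive_sinh, is_derive_cosh, open_itv_pos.
  all: intros; try apply Hint; auto; try ring; try (rewrite <- Heps; ring).
  all: pose proof (cosh_sinh_sq t); destruct (sign_cases eps Heps) as [-> | ->]; lra.
Qed.

Lemma rectifying_cosh_rep_form eps (C S : V3 -> Prop) : eps ^ 2 = 1 ->
  (forall v, hm v v = eps -> C v) -> (forall x, hm x x = - eps -> S x) ->
  (forall s, I s -> hm (vD alpha s) (vD alpha s) = eps) ->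
  rectifying_with I alpha timelike_plane ->
  (forall s, I s -> 0 < - eps * hm (alpha s) (alpha s) \/ alpha s = V0) ->
  rep_form I alpha cosh C S.
Proof.
  intros Heps HC HS HE Hrec Hpos.
  destruct (timelike_rectifying_first_integrals I alpha eps HIi Hsm Hu Heps HE Hrec)
    as [c [a [Ha Hint]]].
  assert (Hee : eps * eps = 1) by (simpl in Heps; lra).
  assert (Hlt : forall s, I s -> (s + c) ^ 2 < a ^ 2).
  { intros s Hs. destruct (Hint s Hs) as [KH KF].
    pose proof (first_integrals_position_sign _ _ eps (s + c) a (- eps) Heps Ha KH KF (Hpos s Hs)).
    replace (- eps * eps) with (- (eps * eps)) in H by ring. rewrite Hee in H. lra. }
  assert (Hsmooth : forall n, Cn n (fun _ => True) cosh /\ Cn n (fun _ => True) sinh)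
    by (intros n; destruct (Cn_sinh_cosh n _ open_full); auto).
  assert (Hcosh : forall t, True -> cosh t <> 0) by (intros t _; apply Rgt_not_eq, cosh_pos).
  assert (Hpsi : forall s, I s -> True /\
    1 * a * (sinh (artanh ((s + c) / a)) / cosh (artanh ((s + c) / a))) - c = s).
  { intros s Hs. assert (Hx : -1 < (s + c) / a < 1).
    { pose proof (Hlt s Hs). assert (- a < s + c < a) by nra.
      split; [apply (Rmult_lt_reg_r a) | apply (Rmult_lt_reg_r a)]; auto; field_simplify; lra. }
    split; auto. rewrite (tanh_artanh _ Hx). field. lra. }
  apply (rep_form_construct I (fun _ => True) alpha cosh sinh cosh
    (fun s => artanh ((s + c) / a)) a c eps (- eps) (- eps) eps 1 (-1));
    auto using is_derive_sinh, is_derive_cosh, open_itv_full.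
  all: intros; try apply Hint; auto; try ring; try (rewrite <- Heps; ring).
  all: pose proof (cosh_sinh_sq t); destruct (sign_cases eps Heps) as [-> | ->]; lra.
Qed.

End ForwardCases.

Section Characterisations.
Variables (I : R -> Prop) (alpha : R -> V3).
Hypotheses (HIi : is_open_itv I) (Hsm : vsmooth I alpha) (Hu : unit_speed I alpha)
  (Hfr : has_nonnull_frenet_frame I alpha).

Lemma spacelike_curve_unit :
  spacelike_curve I alpha <-> forall s, I s -> hm (vD alpha s) (vD alpha s) = 1.
Proof.
  split; intros H s Hs.
  - apply spacelike_unit; [apply H | apply Nrm_eq_1, Hu]; auto.
  - left. rewrite H; auto. lra.
Qed.

Lemma timelike_curve_unit :
  timelike_curve I alpha <-> forall s, I s -> hm (vD alpha s) (vD alpha s) = -1.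
Proof.
  split; intros H s Hs.
  - apply timelike_unit; [apply H | apply Nrm_eq_1, Hu]; auto.
  - red. rewrite H; auto. lra.
Qed.

Lemma spacelike_position_sign :
  spacelike_position I alpha <->
  forall s, I s -> 0 < 1 * hm (alpha s) (alpha s) \/ alpha s = V0.
Proof. split; intros H s Hs; destruct (H s Hs); [left; lra | right | left; lra | right]; auto. Qed.

Lemma timelike_position_sign :
  (forall s, I s -> 0 < -1 * hm (alpha s) (alpha s)) -> timelike_position I alpha.
Proof. intros H s Hs. pose proof (H s Hs). red. lra. Qed.

Lemma rectifying_spacelike_iff_cos :
  rectifying_with I alpha spacelike_plane <-> rep_form I alpha cos spacelike in_S21.
Proof.
  split; [apply rectifying_cos_rep_form | apply rep_form_cos_rectifying]; auto.
Qed.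

Lemma spacelike_rectifying_iff_sinh :
  spacelike_curve I alpha /\ rectifying_with I alpha timelike_plane /\
    spacelike_position I alpha <-> rep_form I alpha sinh timelike in_S21.
Proof.
  rewrite spacelike_curve_unit, spacelike_position_sign. split.
  - intros [HE [Hrec Hpos]]. apply (rectifying_sinh_rep_form I alpha HIi Hsm Hu 1); auto.
    + ring.
    + intros v Hv. red. lra.
  - intros Hr. destruct (rep_form_sinh_rectifying I alpha HIi Hsm Hu Hfr 1 timelike in_S21)
      as [HE [Hpos Hrec]]; auto using timelike_unit; try ring.
Qed.

Lemma timelike_rectifying_iff_sinh :
  timelike_curve I alpha /\ rectifying_with I alpha timelike_plane /\
    timelike_position I alpha <-> rep_form I alpha sinh spacelike in_H20.
Proof.
  rewrite timelike_curve_unit. split.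
  - intros [HE [Hrec Hpos]]. apply (rectifying_sinh_rep_form I alpha HIi Hsm Hu (-1)); auto.
    + ring.
    + intros v Hv. left. lra.
    + intros s Hs. left. pose proof (Hpos s Hs). red in H. lra.
  - intros Hr. destruct (rep_form_sinh_rectifying I alpha HIi Hsm Hu Hfr (-1) spacelike in_H20)
      as [HE [Hpos Hrec]]; auto using timelike_position_sign; try ring.
    intros v Hv H2. rewrite (spacelike_unit v); auto. ring.
Qed.

Lemma spacelike_rectifying_iff_cosh :
  spacelike_curve I alpha /\ rectifying_with I alpha timelike_plane /\
    timelike_position I alpha <-> rep_form I alpha cosh spacelike in_H20.
Proof.
  rewrite spacelike_curve_unit. split.
  - intros [HE [Hrec Hpos]]. apply (rectifying_cosh_rep_form I alpha HIi Hsm Hu 1); auto.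
    + ring.
    + intros v Hv. left. lra.
    + intros s Hs. left. pose proof (Hpos s Hs). red in H. lra.
  - intros Hr. destruct (rep_form_cosh_rectifying I alpha HIi Hsm Hu Hfr 1 spacelike in_H20)
      as [HE [Hpos Hrec]]; auto using spacelike_unit, timelike_position_sign; ring.
Qed.

Lemma timelike_rectifying_iff_cosh :
  timelike_curve I alpha /\ rectifying_with I alpha timelike_plane /\
    spacelike_position I alpha <-> rep_form I alpha cosh timelike in_S21.
Proof.
  rewrite timelike_curve_unit, spacelike_position_sign. split.
  - intros [HE [Hrec Hpos]]. apply (rectifying_cosh_rep_form I alpha HIi Hsm Hu (-1)); auto.
    + ring.
    + intros v Hv. red. lra.
    + intros x Hx. red. lra.
    + intros s Hs. destruct (Hpos s Hs); [left; lra | right; auto].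
  - intros Hr. destruct (rep_form_cosh_rectifying I alpha HIi Hsm Hu Hfr (-1) timelike in_S21)
      as [HE [Hpos Hrec]]; auto using timelike_unit; try ring.
    + intros x Hx. rewrite Hx. ring.
    + repeat split; auto. intros s Hs. left. pose proof (Hpos s Hs). lra.
Qed.

End Characterisations.

Theorem theorem3p4 (I : R -> Prop) (alpha : R -> V3) :
  is_open_itv I -> vsmooth I alpha -> unit_speed I alpha ->
  has_nonnull_frenet_frame I alpha ->
  (* (i) *)
  (rectifying_with I alpha spacelike_plane <->
   rep_form I alpha cos spacelike in_S21) /\
  (* (ii), spacelike case *)
  (spacelike_curve I alpha /\ rectifying_with I alpha timelike_plane /\
     spacelike_position I alpha <->
   rep_form I alpha sinh timelike in_S21) /\
  (* (ii), timelike case *)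
  (timelike_curve I alpha /\ rectifying_with I alpha timelike_plane /\
     timelike_position I alpha <->
   rep_form I alpha sinh spacelike in_H20) /\
  (* (iii), spacelike case *)
  (spacelike_curve I alpha /\ rectifying_with I alpha timelike_plane /\
     timelike_position I alpha <->
   rep_form I alpha cosh spacelike in_H20) /\
  (* (iii), timelike case *)
  (timelike_curve I alpha /\ rectifying_with I alpha timelike_plane /\
     spacelike_position I alpha <->
   rep_form I alpha cosh timelike in_S21).
Proof.
  intros HIi Hsm Hu Hfr.
  split; [apply rectifying_spacelike_iff_cos; auto|].
  split; [apply spacelike_rectifying_iff_sinh; auto|].
  split; [apply timelike_rectifying_iff_sinh; auto|].
  split; [apply spacelike_rectifying_iff_cosh; auto|].
  apply timelike_rectifying_iff_cosh; auto.
Qed.
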